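(* The category $\mathsf{XMod}(\mathsf{GpGd})$ of crossed modules over group-groupoids is equivalent to the category $\mathsf{DGG}$ of double group-groupoids.
   Context: A group-groupoid $G$ is a groupoid with set of arrows $G$ and set of objects $G_0$, source and target maps $d_0,d_1\colon G\to G_0$, identity map $\varepsilon\colon G_0\to G$ ($\varepsilon(x)=1_x$), and composition $b\circ a$ defined when $d_1(a)=d_0(b)$, such that $G$ and $G_0$ are groups (written additively) and $d_0,d_1,\varepsilon$, the groupoid inversion and the composition are group homomorphisms. A morphism of group-groupoids is a functor that is a group homomorphism on arrows and on objects. An action of a group-groupoid $H$ on a group-groupoid $G$ is called a derived action if it is an action $(b,a)\mapsto b\cdot a$ of the group of arrows $H$ on the group of arrows $G$ by group automorphisms such that, for a suitable group structure on $G_0\times H_0$, the product groupoid $G\times H$ on $G_0\times H_0$ with addition $(a,b)+(a_1,b_1)=(a+b\cdot a_1,\,b+b_1)$ is a group-groupoid (denoted $G\rtimes H$); equivalently it arises from a split extension of group-groupoids as $b\cdot a=s(b)+a-s(b)$. A crossed module over group-groupoids is a triple $(G,H,\partial)$ where $G,H$ are group-groupoids, $H$ acts on $G$ by a derived action, and $\partial=(\partial_1,\partial_0)\colon G\to H$ is a morphism of group-groupoids ($\partial_1$ on arrows, $\partial_0$ on objects) such that $(G,H,\partial_1)$ is a crossed module of groups: $\partial_1(b\cdot a)=b+\partial_1(a)-b$ and $\partial_1(a)\cdot a_1=a+a_1-a$ for all $a,a_1\in G$, $b\in H$. A morphism $(f,g)\colon(G,H,\partial)\to(G',H',\partial')$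 in $\mathsf{XMod}(\mathsf{GpGd})$ is a pair of group-groupoid morphisms $f\colon G\to G'$, $g\colon H\to H'$ with $g\partial=\partial' f$ and $f(b\cdot a)=g(b)\cdot f(a)$ for all arrows $a\in G$, $b\in H$. A double group-groupoid $(S,H,V,P)$ is a groupoid object in the category of group-groupoids: it consists of a group-groupoid $S\rightrightarrows V$ (vertical structure, with source/target $d_0^v,d_1^v$, identities $\varepsilon^v$, composition $\circ_v$), a group-groupoid $H\rightrightarrows P$ (with $d_0^H,d_1^H,\varepsilon^H$), and morphisms of group-groupoids $d_0,d_1\colon (S\rightrightarrows V)\to(H\rightrightarrows P)$, $\varepsilon\colon(H\rightrightarrows P)\to(S\rightrightarrows V)$, and a composition morphism $(S\rightrightarrows V)\times_{(H\rightrightarrows P)}(S\rightrightarrows V)\to(S\rightrightarrows V)$ satisfying the groupoid axioms. Their arrow components $d_0^h,d_1^h\colon S\to H$, $\varepsilon^h\colon H\to S$, $\circ_h$ make $S$ a group-groupoid over $H$ (horizontal structure) and their object components $d_0^V,d_1^V\colon V\to P$, $\varepsilon^V$, $\circ_V$ make $V$ a group-groupoid over $P$. A morphism of double group-groupoids is a quadruple of group homomorphisms $f_s\colon S\to S'$, $f_h\colon H\to H'$, $f_v\colon V\to V'$, $f_p\colon P\to P'$ commuting with all structure maps (sources, targets, identities, compositions, inverses, horizontal and vertical). *)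

Set Implicit Arguments.

Definition is_group {T : Type} (add : T -> T -> T) (zero : T) (neg : T -> T) : Prop :=
  (forall x y z, add x (add y z) = add (add x y) z) /\
  (forall x, add zero x = x) /\ (forall x, add x zero = x) /\
  (forall x, add (neg x) x = zero) /\ (forall x, add x (neg x) = zero).

Definition is_ghom {A B : Type} (addA : A -> A -> A) (addB : B -> B -> B) (f : A -> B) : Prop :=
  forall x y, f (addA x y) = addB (f x) (f y).

(* ---------- groupoids: composition  c b a = b o a, defined when t a = s b ---------- *)
Definition is_groupoid {A O : Type} (s t : A -> O) (e : O -> A)
  (c : A -> A -> A) (i : A -> A) : Prop :=
  (forall x, s (e x) = x) /\ (forall x, t (e x) = x) /\
  (forall a b, t a = s b -> s (c b a) = s a /\ t (c b a) = t b) /\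
  (forall a b d, t a = s b -> t b = s d -> c d (c b a) = c (c d b) a) /\
  (forall a, c (e (t a)) a = a) /\ (forall a, c a (e (s a)) = a) /\
  (forall a, s (i a) = t a /\ t (i a) = s a) /\
  (forall a, c (i a) a = e (s a)) /\ (forall a, c a (i a) = e (t a)).

Definition is_gpgd {A O : Type}
  (addA : A -> A -> A) (zeroA : A) (negA : A -> A)
  (addO : O -> O -> O) (zeroO : O) (negO : O -> O)
  (s t : A -> O) (e : O -> A) (c : A -> A -> A) (i : A -> A) : Prop :=
  is_group addA zeroA negA /\ is_group addO zeroO negO /\
  is_groupoid s t e c i /\
  is_ghom addA addO s /\ is_ghom addA addO t /\ is_ghom addO addA e /\
  is_ghom addA addA i /\
  (forall a b a1 b1, t a = s b -> t a1 = s b1 ->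
     c (addA b b1) (addA a a1) = addA (c b a) (c b1 a1)).

Record GpGd : Type := MkGpGd {
  Ar : Type; Ob : Type;
  addA : Ar -> Ar -> Ar; zeroA : Ar; negA : Ar -> Ar;
  addO : Ob -> Ob -> Ob; zeroO : Ob; negO : Ob -> Ob;
  src : Ar -> Ob; tgt : Ar -> Ob; idn : Ob -> Ar;
  cmp : Ar -> Ar -> Ar;
  inv : Ar -> Ar;
  gpgd_ax : is_gpgd addA zeroA negA addO zeroO negO src tgt idn cmp inv }.

Definition is_gg_mor {A O A' O' : Type}
  (addA : A -> A -> A) (addO : O -> O -> O) (s t : A -> O) (e : O -> A) (c : A -> A -> A)
  (addA' : A' -> A' -> A') (addO' : O' -> O' -> O') (s' t' : A' -> O') (e' : O' -> A')
  (c' : A' -> A' -> A') (fa : A -> A') (fo : O -> O') : Prop :=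
  is_ghom addA addA' fa /\ is_ghom addO addO' fo /\
  (forall a, s' (fa a) = fo (s a)) /\ (forall a, t' (fa a) = fo (t a)) /\
  (forall x, fa (e x) = e' (fo x)) /\
  (forall a b, t a = s b -> fa (c b a) = c' (fa b) (fa a)).

Definition is_gpgd_mor (G H : GpGd) (fa : Ar G -> Ar H) (fo : Ob G -> Ob H) : Prop :=
  is_gg_mor (addA G) (addO G) (src G) (tgt G) (idn G) (cmp G)
            (addA H) (addO H) (src H) (tgt H) (idn H) (cmp H) fa fo.

Lemma is_gg_mor_comp {A O A' O' A'' O'' : Type}
  addA addO s t e c addA' addO' s' t' e' c' addA'' addO'' s'' t'' e'' c''
  (fa : A -> A') (fo : O -> O') (ga : A' -> A'') (go : O' -> O'') :
  is_gg_mor addA addO s t e c addA' addO' s' t' e' c' fa fo ->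
  is_gg_mor addA' addO' s' t' e' c' addA'' addO'' s'' t'' e'' c'' ga go ->
  is_gg_mor addA addO s t e c addA'' addO'' s'' t'' e'' c''
            (fun a => ga (fa a)) (fun x => go (fo x)).
Proof.
  intros (F1 & F2 & F3 & F4 & F5 & F6) (G1 & G2 & G3 & G4 & G5 & G6).
  split; [|split; [|split; [|split; [|split]]]].
  - intros x y; rewrite F1, G1; reflexivity.
  - intros x y; rewrite F2, G2; reflexivity.
  - intro a; rewrite G3, F3; reflexivity.
  - intro a; rewrite G4, F4; reflexivity.
  - intro x; rewrite F5, G5; reflexivity.
  - intros a b Hab; rewrite (F6 a b Hab); apply G6.
    rewrite F4, F3, Hab; reflexivity.
Qed.

Lemma is_gg_mor_id {A O : Type} addA addO (s t : A -> O) e c :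
  is_gg_mor addA addO s t e c addA addO s t e c (fun a => a) (fun x => x).
Proof.
  unfold is_gg_mor, is_ghom; repeat split; intros; reflexivity.
Qed.

Definition is_derived_action (G H : GpGd) (act : Ar H -> Ar G -> Ar G) : Prop :=
  (forall a, act (zeroA H) a = a) /\
  (forall b b1 a, act (addA H b b1) a = act b (act b1 a)) /\
  (forall b a a1, act b (addA G a a1) = addA G (act b a) (act b a1)) /\
  exists (addP : Ob G * Ob H -> Ob G * Ob H -> Ob G * Ob H)
         (zeroP : Ob G * Ob H) (negP : Ob G * Ob H -> Ob G * Ob H),
    is_gpgd
      (fun p q : Ar G * Ar H => (addA G (fst p) (act (snd p) (fst q)), addA H (snd p) (snd q)))
      (zeroA G, zeroA H)
      (fun p : Ar G * Ar H => (act (negA H (snd p)) (negA G (fst p)), negA H (snd p)))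
      addP zeroP negP
      (fun p : Ar G * Ar H => (src G (fst p), src H (snd p)))
      (fun p : Ar G * Ar H => (tgt G (fst p), tgt H (snd p)))
      (fun x : Ob G * Ob H => (idn G (fst x), idn H (snd x)))
      (fun q p : Ar G * Ar H => (cmp G (fst q) (fst p), cmp H (snd q) (snd p)))
      (fun p : Ar G * Ar H => (inv G (fst p), inv H (snd p))).

Record XModGG : Type := MkXModGG {
  XG : GpGd; XH : GpGd;
  xact : Ar XH -> Ar XG -> Ar XG;
  bd1 : Ar XG -> Ar XH; bd0 : Ob XG -> Ob XH;
  xact_derived : is_derived_action XG XH xact;
  bd_mor : is_gpgd_mor XG XH bd1 bd0;
  xm1 : forall b a, bd1 (xact b a) = addA XH (addA XH b (bd1 a)) (negA XH b);
  xm2 : forall a a1, xact (bd1 a) a1 = addA XG (addA XG a a1) (negA XG a) }.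

Record XHom (X Y : XModGG) : Type := MkXHom {
  hfa : Ar (XG X) -> Ar (XG Y); hfo : Ob (XG X) -> Ob (XG Y);
  hga : Ar (XH X) -> Ar (XH Y); hgo : Ob (XH X) -> Ob (XH Y);
  hf_mor : is_gpgd_mor (XG X) (XG Y) hfa hfo;
  hg_mor : is_gpgd_mor (XH X) (XH Y) hga hgo;
  h_comm1 : forall a, hga (bd1 X a) = bd1 Y (hfa a);
  h_comm0 : forall x, hgo (bd0 X x) = bd0 Y (hfo x);
  h_act : forall b a, hfa (xact X b a) = xact Y (hga b) (hfa a) }.

Definition xhom_eq (X Y : XModGG) (f g : XHom X Y) : Prop :=
  (forall a, hfa f a = hfa g a) /\ (forall x, hfo f x = hfo g x) /\
  (forall b, hga f b = hga g b) /\ (forall y, hgo f y = hgo g y).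

Definition xhom_id (X : XModGG) : XHom X X.
Proof.
  refine (@MkXHom X X (fun a => a) (fun x => x) (fun b => b) (fun y => y) _ _ _ _ _).
  - apply is_gg_mor_id.
  - apply is_gg_mor_id.
  - reflexivity.
  - reflexivity.
  - reflexivity.
Defined.

Definition xhom_comp (X Y Z : XModGG) (g : XHom Y Z) (f : XHom X Y) : XHom X Z.
Proof.
  refine (@MkXHom X Z (fun a => hfa g (hfa f a)) (fun x => hfo g (hfo f x))
            (fun b => hga g (hga f b)) (fun y => hgo g (hgo f y)) _ _ _ _ _).
  - eapply is_gg_mor_comp; [exact (hf_mor f) | exact (hf_mor g)].
  - eapply is_gg_mor_comp; [exact (hg_mor f) | exact (hg_mor g)].
  - intro a; rewrite (h_comm1 f), (h_comm1 g); reflexivity.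
  - intro x; rewrite (h_comm0 f), (h_comm0 g); reflexivity.
  - intros b a; rewrite (h_act f), (h_act g); reflexivity.
Defined.

(* ---------- double group-groupoids (groupoid objects in GpGd) ---------- *)
Record DGG : Type := MkDGG {
  SV : GpGd;   (* vertical group-groupoid S => V *)
  HP : GpGd;   (* group-groupoid H => P *)
  (* arrow components: horizontal structure S => H *)
  hs : Ar SV -> Ar HP; ht : Ar SV -> Ar HP; he : Ar HP -> Ar SV;
  hc : Ar SV -> Ar SV -> Ar SV; hi : Ar SV -> Ar SV;
  (* object components: V => P *)
  os : Ob SV -> Ob HP; ot : Ob SV -> Ob HP; oe : Ob HP -> Ob SV;
  oc : Ob SV -> Ob SV -> Ob SV; oi : Ob SV -> Ob SV;
  ax_SH : is_gpgd (addA SV) (zeroA SV) (negA SV) (addA HP) (zeroA HP) (negA HP) hs ht he hc hi;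
  ax_VP : is_gpgd (addO SV) (zeroO SV) (negO SV) (addO HP) (zeroO HP) (negO HP) os ot oe oc oi;
  d0_mor : is_gpgd_mor SV HP hs os;
  d1_mor : is_gpgd_mor SV HP ht ot;
  eps_mor : is_gpgd_mor HP SV he oe;
  (* the composition (hc, oc) is a functor on the pullback group-groupoid
     (its group-homomorphism part is the last clause of ax_SH / ax_VP) *)
  comp_src : forall u u', ht u = hs u' -> src SV (hc u' u) = oc (src SV u') (src SV u);
  comp_tgt : forall u u', ht u = hs u' -> tgt SV (hc u' u) = oc (tgt SV u') (tgt SV u);
  comp_idn : forall v v', ot v = os v' -> hc (idn SV v') (idn SV v) = idn SV (oc v' v);
  interchange : forall u u' w w', ht u = hs u' -> ht w = hs w' ->
      tgt SV u = src SV w -> tgt SV u' = src SV w' ->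
      cmp SV (hc w' w) (hc u' u) = hc (cmp SV w' u') (cmp SV w u) }.

Definition is_dgg_mor (D E : DGG) (fs : Ar (SV D) -> Ar (SV E)) (fh : Ar (HP D) -> Ar (HP E))
  (fv : Ob (SV D) -> Ob (SV E)) (fp : Ob (HP D) -> Ob (HP E)) : Prop :=
  is_gpgd_mor (SV D) (SV E) fs fv /\ (forall a, fs (inv (SV D) a) = inv (SV E) (fs a)) /\
  is_gpgd_mor (HP D) (HP E) fh fp /\ (forall a, fh (inv (HP D) a) = inv (HP E) (fh a)) /\
  is_gg_mor (addA (SV D)) (addA (HP D)) (hs D) (ht D) (he D) (hc D)
            (addA (SV E)) (addA (HP E)) (hs E) (ht E) (he E) (hc E) fs fh /\
  (forall a, fs (hi D a) = hi E (fs a)) /\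
  is_gg_mor (addO (SV D)) (addO (HP D)) (os D) (ot D) (oe D) (oc D)
            (addO (SV E)) (addO (HP E)) (os E) (ot E) (oe E) (oc E) fv fp /\
  (forall x, fv (oi D x) = oi E (fv x)).

Record DHom (D E : DGG) : Type := MkDHom {
  dfs : Ar (SV D) -> Ar (SV E); dfh : Ar (HP D) -> Ar (HP E);
  dfv : Ob (SV D) -> Ob (SV E); dfp : Ob (HP D) -> Ob (HP E);
  dmor : is_dgg_mor D E dfs dfh dfv dfp }.

Definition dhom_eq (D E : DGG) (f g : DHom D E) : Prop :=
  (forall a, dfs f a = dfs g a) /\ (forall a, dfh f a = dfh g a) /\
  (forall x, dfv f x = dfv g x) /\ (forall x, dfp f x = dfp g x).

Definition dhom_id (D : DGG) : DHom D D.
Proof.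
  refine (@MkDHom D D (fun a => a) (fun a => a) (fun x => x) (fun x => x) _).
  unfold is_dgg_mor; repeat split; try apply is_gg_mor_id; intros; reflexivity.
Defined.

Definition dhom_comp (D E F : DGG) (g : DHom E F) (f : DHom D E) : DHom D F.
Proof.
  refine (@MkDHom D F (fun a => dfs g (dfs f a)) (fun a => dfh g (dfh f a))
            (fun x => dfv g (dfv f x)) (fun x => dfp g (dfp f x)) _).
  destruct (dmor f) as (F1 & F2 & F3 & F4 & F5 & F6 & F7 & F8).
  destruct (dmor g) as (G1 & G2 & G3 & G4 & G5 & G6 & G7 & G8).
  split; [|split; [|split; [|split; [|split; [|split; [|split]]]]]].
  - eapply is_gg_mor_comp; [exact F1 | exact G1].
  - intro a; rewrite F2, G2; reflexivity.
  - eapply is_gg_mor_comp; [exact F3 | exact G3].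
  - intro a; rewrite F4, G4; reflexivity.
  - eapply is_gg_mor_comp; [exact F5 | exact G5].
  - intro a; rewrite F6, G6; reflexivity.
  - eapply is_gg_mor_comp; [exact F7 | exact G7].
  - intro a; rewrite F8, G8; reflexivity.
Defined.

Record Cat : Type := MkCat {
  cobj : Type;
  chom : cobj -> cobj -> Type;
  cheq : forall x y, chom x y -> chom x y -> Prop;
  cid : forall x, chom x x;
  ccomp : forall x y z, chom y z -> chom x y -> chom x z }.

Arguments cheq {c x y} _ _.
Arguments cid {c} x.
Arguments ccomp {c x y z} _ _.

Definition is_functor (C D : Cat) (F0 : cobj C -> cobj D)
  (F1 : forall x y, chom C x y -> chom D (F0 x) (F0 y)) : Prop :=
  (forall x y (f g : chom C x y), cheq f g -> cheq (F1 x y f) (F1 x y g)) /\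
  (forall x, cheq (F1 x x (cid x)) (cid (F0 x))) /\
  (forall x y z (g : chom C y z) (f : chom C x y),
      cheq (F1 x z (ccomp g f)) (ccomp (F1 y z g) (F1 x y f))).

Definition is_nat_iso (C D : Cat) (F0 G0 : cobj C -> cobj D)
  (F1 : forall x y, chom C x y -> chom D (F0 x) (F0 y))
  (G1 : forall x y, chom C x y -> chom D (G0 x) (G0 y))
  (eta : forall x, chom D (F0 x) (G0 x)) : Prop :=
  (forall x y (f : chom C x y), cheq (ccomp (G1 x y f) (eta x)) (ccomp (eta y) (F1 x y f))) /\
  (forall x, exists g : chom D (G0 x) (F0 x),
      cheq (ccomp g (eta x)) (cid (F0 x)) /\ cheq (ccomp (eta x) g) (cid (G0 x))).

Definition cat_equivalent (C D : Cat) : Prop :=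
  exists (F0 : cobj C -> cobj D) (F1 : forall x y, chom C x y -> chom D (F0 x) (F0 y))
         (G0 : cobj D -> cobj C) (G1 : forall x y, chom D x y -> chom C (G0 x) (G0 y)),
    is_functor C D F0 F1 /\ is_functor D C G0 G1 /\
    (exists eta : forall x, chom C x (G0 (F0 x)),
        is_nat_iso C C (fun x => x) (fun x => G0 (F0 x))
          (fun x y f => f) (fun x y f => G1 (F0 x) (F0 y) (F1 x y f)) eta) /\
    (exists eps : forall y, chom D (F0 (G0 y)) y,
        is_nat_iso D D (fun y => F0 (G0 y)) (fun y => y)
          (fun x y f => F1 (G0 x) (G0 y) (G1 x y f)) (fun x y f => f) eps).

Definition XModGpGd : Cat := MkCat XHom xhom_eq xhom_id xhom_comp.
Definition DblGpGd : Cat := MkCat DHom dhom_eq dhom_id dhom_comp.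

(* A crossed module [bd : G -> H] of group-groupoids yields a double group-groupoid whose
   square group-groupoid is the semidirect product [G x| H] (its group of objects is forced by
   the derived action), with horizontal arrows [(a, b) : b -> bd a + b] composed by
   [(a', b') o (a, b) = (a' + a, b)]; the double-groupoid axioms are then the crossed-module
   identities, on arrows and on objects.  Conversely, a double group-groupoid [(S, H, V, P)]
   yields the crossed module [d1 : Ker d0 -> H], with [H] acting by conjugation through the
   identities [eps]; the Peiffer identity holds because the kernels of [d0] and [d1] commute
   (Eckmann-Hilton).  Since every [u] in [S] splits uniquely as [(u - eps (d0 u)) + eps (d0 u)],
   the maps [a |-> (a, 0)] and [(k, b) |-> k + eps b] are natural isomorphisms.  Throughout, the
   composition of a group-groupoid is determined by its group law: [b o a = b - 1 + a]. *)

From Stdlib Require Import Setoid ProofIrrelevance.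

Section Group.
Context {T : Type} {add : T -> T -> T} {zero : T} {neg : T -> T}.
Hypothesis G : is_group add zero neg.

Lemma grp_addA x y z : add (add x y) z = add x (add y z).
Proof. destruct G as [A _]; rewrite A; reflexivity. Qed.
Lemma grp_add0l x : add zero x = x. Proof. apply G. Qed.
Lemma grp_add0r x : add x zero = x. Proof. apply G. Qed.
Lemma grp_addNl x : add (neg x) x = zero. Proof. apply G. Qed.
Lemma grp_addNr x : add x (neg x) = zero. Proof. apply G. Qed.

Lemma grp_addKl x y : add (neg x) (add x y) = y.
Proof. rewrite <- grp_addA, grp_addNl, grp_add0l; reflexivity. Qed.
Lemma grp_addNKl x y : add x (add (neg x) y) = y.
Proof. rewrite <- grp_addA, grp_addNr, grp_add0l; reflexivity. Qed.

Lemma grp_addIl x y z : add x y = add x z -> y = z.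
Proof. intro E; rewrite <- (grp_addKl x y), E, grp_addKl; reflexivity. Qed.
Lemma grp_addIr x y z : add y x = add z x -> y = z.
Proof.
  intro E; rewrite <- (grp_add0r y), <- (grp_addNr x), <- grp_addA, E.
  rewrite grp_addA, grp_addNr, grp_add0r.
  reflexivity.
Qed.

Lemma grp_neg_unique x y : add x y = zero -> y = neg x.
Proof. intro E; apply (grp_addIl x); rewrite E, grp_addNr; reflexivity. Qed.
Lemma grp_negK x : neg (neg x) = x.
Proof. symmetry; apply grp_neg_unique, grp_addNl. Qed.
Lemma grp_neg0 : neg zero = zero.
Proof. symmetry; apply grp_neg_unique, grp_add0l. Qed.
Lemma grp_negD x y : neg (add x y) = add (neg y) (neg x).
Proof. symmetry; apply grp_neg_unique; rewrite grp_addA, grp_addNKl, grp_addNr; reflexivity. Qed.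

End Group.

(* Normal form: right-associated sums with adjacent [x], [- x] cancelled. *)
Ltac group_simpl G := repeat first
  [ rewrite (grp_addA G) | rewrite (grp_add0l G) | rewrite (grp_add0r G)
  | rewrite (grp_addNl G) | rewrite (grp_addNr G) | rewrite (grp_addKl G)
  | rewrite (grp_addNKl G) | rewrite (grp_negK G) | rewrite (grp_neg0 G)
  | rewrite (grp_negD G) ].

Section GroupHom.
Context {A B : Type} {addA : A -> A -> A} {zA : A} {nA : A -> A}
  {addB : B -> B -> B} {zB : B} {nB : B -> B} {f : A -> B}.
Hypotheses (GA : is_group addA zA nA) (GB : is_group addB zB nB) (Hf : is_ghom addA addB f).

Lemma ghom_zero : f zA = zB.
Proof. apply (grp_addIl GB (f zA)); rewrite <- Hf, (grp_add0l GA), (grp_add0r GB); reflexivity. Qed.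
Lemma ghom_neg x : f (nA x) = nB (f x).
Proof. apply (grp_neg_unique GB); rewrite <- Hf, (grp_addNr GA); apply ghom_zero. Qed.

End GroupHom.

Lemma is_group_transport {T T'} {add : T -> T -> T} {zero neg} {add' : T' -> T' -> T'} {zero' neg'}
  {f : T' -> T} :
  is_group add zero neg -> (forall x y, f x = f y -> x = y) ->
  (forall x y, f (add' x y) = add (f x) (f y)) -> f zero' = zero ->
  (forall x, f (neg' x) = neg (f x)) -> is_group add' zero' neg'.
Proof.
  intros G inj f_add f0 f_neg.
  repeat split; intros; apply inj; rewrite ?f_add, ?f0, ?f_neg, ?f_add;
    [symmetry; apply (grp_addA G) | apply G ..].
Qed.

Section GroupGroupoid.
Context {A O : Type} {add : A -> A -> A} {zero : A} {neg : A -> A}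
  {addo : O -> O -> O} {zeroo : O} {nego : O -> O}
  {s t : A -> O} {e : O -> A} {c : A -> A -> A} {i : A -> A}.
Hypothesis GG : is_gpgd add zero neg addo zeroo nego s t e c i.

Lemma gpgd_grp : is_group add zero neg. Proof. apply GG. Qed.
Lemma gpgd_grpO : is_group addo zeroo nego. Proof. apply GG. Qed.
Lemma gpgd_groupoid : is_groupoid s t e c i. Proof. apply GG. Qed.
Lemma gpgd_src_idn x : s (e x) = x. Proof. apply GG. Qed.
Lemma gpgd_tgt_idn x : t (e x) = x. Proof. apply GG. Qed.
Lemma gpgd_cmp_idl a : c (e (t a)) a = a. Proof. apply GG. Qed.
Lemma gpgd_cmp_idr a : c a (e (s a)) = a. Proof. apply GG. Qed.
Lemma gpgd_src_inv a : s (i a) = t a. Proof. apply GG. Qed.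
Lemma gpgd_cmp_invl a : c (i a) a = e (s a). Proof. apply GG. Qed.
Lemma gpgd_src_add : is_ghom add addo s. Proof. apply GG. Qed.
Lemma gpgd_tgt_add : is_ghom add addo t. Proof. apply GG. Qed.
Lemma gpgd_idn_add : is_ghom addo add e. Proof. apply GG. Qed.
Lemma gpgd_inv_add : is_ghom add add i. Proof. apply GG. Qed.
Lemma gpgd_interchange a b a1 b1 : t a = s b -> t a1 = s b1 ->
  c (add b b1) (add a a1) = add (c b a) (c b1 a1).
Proof. apply GG. Qed.

Lemma gpgd_src0 : s zero = zeroo. Proof. exact (ghom_zero gpgd_grp gpgd_grpO gpgd_src_add). Qed.
Lemma gpgd_tgt0 : t zero = zeroo. Proof. exact (ghom_zero gpgd_grp gpgd_grpO gpgd_tgt_add). Qed.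
Lemma gpgd_idn0 : e zeroo = zero. Proof. exact (ghom_zero gpgd_grpO gpgd_grp gpgd_idn_add). Qed.
Lemma gpgd_srcN a : s (neg a) = nego (s a).
Proof. exact (ghom_neg gpgd_grp gpgd_grpO gpgd_src_add a). Qed.
Lemma gpgd_tgtN a : t (neg a) = nego (t a).
Proof. exact (ghom_neg gpgd_grp gpgd_grpO gpgd_tgt_add a). Qed.
Lemma gpgd_idnN x : e (nego x) = neg (e x).
Proof. exact (ghom_neg gpgd_grpO gpgd_grp gpgd_idn_add x). Qed.

Lemma gpgd_addoE x y : addo x y = s (add (e x) (e y)).
Proof. rewrite gpgd_src_add, !gpgd_src_idn; reflexivity. Qed.
Lemma gpgd_zerooE : zeroo = s zero.
Proof. symmetry; apply gpgd_src0. Qed.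
Lemma gpgd_negoE x : nego x = s (neg (e x)).
Proof. rewrite gpgd_srcN, gpgd_src_idn; reflexivity. Qed.

(* Interchange with identities: [b o a = (b - 1) + (1 + a)] where [1 = e (s b) = e (t a)]. *)
Lemma gpgd_cmpE a b : t a = s b -> c b a = add b (add (neg (e (s b))) a).
Proof.
  intro E. pose proof gpgd_grp as G.
  assert (Hsrc : s (add b (neg (e (s b)))) = zeroo).
  { rewrite gpgd_src_add, gpgd_srcN, gpgd_src_idn; apply (grp_addNr gpgd_grpO). }
  transitivity (c (add (add b (neg (e (s b)))) (e (s b))) (add zero a)).
  { group_simpl G; reflexivity. }
  rewrite gpgd_interchange.
  - rewrite <- gpgd_idn0; rewrite <- Hsrc at 1; rewrite gpgd_cmp_idr, <- E, gpgd_cmp_idl.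
    group_simpl G; reflexivity.
  - rewrite gpgd_tgt0, Hsrc; reflexivity.
  - rewrite gpgd_src_idn; exact E.
Qed.

Lemma gpgd_invE a : i a = add (e (s a)) (add (neg a) (e (t a))).
Proof.
  pose proof gpgd_grp as G.
  pose proof (gpgd_cmp_invl a) as E.
  rewrite gpgd_cmpE, gpgd_src_inv in E by (rewrite gpgd_src_inv; reflexivity).
  transitivity (add (add (i a) (add (neg (e (t a))) a)) (add (neg a) (e (t a)))).
  - group_simpl G; reflexivity.
  - rewrite E; reflexivity.
Qed.

(* Eckmann-Hilton: interchange applied to [x o 0] and [0 o y] in both orders. *)
Lemma gpgd_add_ker_comm x y : s x = zeroo -> t y = zeroo -> add x y = add y x.
Proof.
  intros Hx Hy. pose proof gpgd_grp as G.
  assert (E1 : c (add x zero) (add zero y) = add x y).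
  { rewrite gpgd_interchange by (rewrite ?gpgd_tgt0, ?gpgd_src0; auto).
    rewrite <- gpgd_idn0; rewrite <- Hx at 1.
    rewrite gpgd_cmp_idr, <- Hy, gpgd_cmp_idl; reflexivity. }
  assert (E2 : c (add zero x) (add y zero) = add y x).
  { rewrite gpgd_interchange by (rewrite ?gpgd_tgt0, ?gpgd_src0; auto).
    rewrite <- gpgd_idn0; rewrite <- Hy at 1.
    rewrite gpgd_cmp_idl, <- Hx, gpgd_cmp_idr; reflexivity. }
  rewrite (grp_add0r G), (grp_add0l G) in E1, E2. congruence.
Qed.

Lemma gpgd_cmp00 : c zero zero = zero.
Proof. rewrite <- gpgd_idn0; rewrite <- (gpgd_tgt_idn zeroo) at 1; apply gpgd_cmp_idl. Qed.

End GroupGroupoid.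

Lemma gg_mor_inv {A O A' O'} {add zero neg addo zeroo nego s t e c i}
  {add' zero' neg' addo' zeroo' nego' s' t' e' c' i'}
  (GG : @is_gpgd A O add zero neg addo zeroo nego s t e c i)
  (GG' : @is_gpgd A' O' add' zero' neg' addo' zeroo' nego' s' t' e' c' i') fa fo :
  is_gg_mor add addo s t e c add' addo' s' t' e' c' fa fo -> forall a, fa (i a) = i' (fa a).
Proof.
  intros (F_add & _ & F_src & F_tgt & F_idn & _) a.
  rewrite (gpgd_invE GG), (gpgd_invE GG'), !F_add, (ghom_neg (gpgd_grp GG) (gpgd_grp GG') F_add),
    !F_idn, F_src, F_tgt.
  reflexivity.
Qed.

Lemma gg_mor_rev {A O A' O'} add addo (s t : A -> O) e c add' addo' (s' t' : A' -> O') e' c'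
  fa fo fa' fo' :
  is_gg_mor add addo s t e c add' addo' s' t' e' c' fa fo ->
  (forall a, fa' (fa a) = a) -> (forall a, fa (fa' a) = a) ->
  (forall x, fo' (fo x) = x) -> (forall x, fo (fo' x) = x) ->
  is_gg_mor add' addo' s' t' e' c' add addo s t e c fa' fo'.
Proof.
  intros (F_add & F_addo & F_src & F_tgt & F_idn & F_cmp) Ka Ka' Ko Ko'.
  assert (fa_inj : forall a b, fa a = fa b -> a = b).
  { intros a b E; rewrite <- (Ka a), E, Ka; reflexivity. }
  assert (fo_inj : forall x y, fo x = fo y -> x = y).
  { intros x y E; rewrite <- (Ko x), E, Ko; reflexivity. }
  repeat split.
  - intros x y; apply fa_inj; rewrite F_add, !Ka'; reflexivity.
  - intros x y; apply fo_inj; rewrite F_addo, !Ko'; reflexivity.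
  - intro a; apply fo_inj; rewrite <- F_src, !Ka', Ko'; reflexivity.
  - intro a; apply fo_inj; rewrite <- F_tgt, !Ka', Ko'; reflexivity.
  - intro x; apply fa_inj; rewrite F_idn, !Ka', Ko'; reflexivity.
  - intros a b E; apply fa_inj.
    assert (E' : t (fa' a) = s (fa' b)).
    { apply fo_inj; rewrite <- F_src, <- F_tgt, !Ka'; exact E. }
    rewrite F_cmp by exact E'; rewrite !Ka'; reflexivity.
Qed.

Section GpGdMorphism.
Context {G H : GpGd} {fa : Ar G -> Ar H} {fo : Ob G -> Ob H}.
Hypothesis M : is_gpgd_mor G H fa fo.

Lemma mor_add : is_ghom (addA G) (addA H) fa. Proof. apply M. Qed.
Lemma mor_addO : is_ghom (addO G) (addO H) fo. Proof. apply M. Qed.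
Lemma mor_src a : src H (fa a) = fo (src G a). Proof. apply M. Qed.
Lemma mor_tgt a : tgt H (fa a) = fo (tgt G a). Proof. apply M. Qed.
Lemma mor_idn x : fa (idn G x) = idn H (fo x). Proof. apply M. Qed.
Lemma mor_cmp a b : tgt G a = src G b -> fa (cmp G b a) = cmp H (fa b) (fa a). Proof. apply M. Qed.
Lemma mor_inv a : fa (inv G a) = inv H (fa a).
Proof. exact (gg_mor_inv (gpgd_ax G) (gpgd_ax H) _ _ M a). Qed.
Lemma mor_zero : fa (zeroA G) = zeroA H.
Proof. exact (ghom_zero (gpgd_grp (gpgd_ax G)) (gpgd_grp (gpgd_ax H)) mor_add). Qed.
Lemma mor_neg a : fa (negA G a) = negA H (fa a).
Proof. exact (ghom_neg (gpgd_grp (gpgd_ax G)) (gpgd_grp (gpgd_ax H)) mor_add a). Qed.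
Lemma mor_zeroO : fo (zeroO G) = zeroO H.
Proof. exact (ghom_zero (gpgd_grpO (gpgd_ax G)) (gpgd_grpO (gpgd_ax H)) mor_addO). Qed.

End GpGdMorphism.

Lemma is_groupoid_transport {A O A' O'} {s t : A -> O} {e c i} {s' t' : A' -> O'} {e' c' i'}
  {f : A' -> A} {g : O' -> O} :
  is_groupoid s t e c i ->
  (forall a b, f a = f b -> a = b) -> (forall x y, g x = g y -> x = y) ->
  (forall a, g (s' a) = s (f a)) -> (forall a, g (t' a) = t (f a)) ->
  (forall x, f (e' x) = e (g x)) -> (forall a, f (i' a) = i (f a)) ->
  (forall a b, t' a = s' b -> f (c' b a) = c (f b) (f a)) ->
  is_groupoid s' t' e' c' i'.
Proof.
  intros (se & te & sc & ass & idl & idr & si & invl & invr) f_inj g_inj fs ft fe fi fc.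
  assert (comp : forall a b, t' a = s' b -> t (f a) = s (f b)).
  { intros a b E; rewrite <- ft, <- fs, E; reflexivity. }
  assert (fsc : forall a b, t' a = s' b -> s' (c' b a) = s' a /\ t' (c' b a) = t' b).
  { intros a b E; destruct (sc _ _ (comp _ _ E)) as [E1 E2].
    split; apply g_inj; rewrite ?fs, ?ft, fc by exact E; assumption. }
  split; [|split; [|split; [|split; [|split; [|split; [|split; [|split]]]]]]].
  - intro x; apply g_inj; rewrite fs, fe; apply se.
  - intro x; apply g_inj; rewrite ft, fe; apply te.
  - intros a b E; apply fsc, E.
  - intros a b d E1 E2.
    assert (E3 : t' (c' b a) = s' d) by (rewrite (proj2 (fsc _ _ E1)); exact E2).
    assert (E4 : t' a = s' (c' d b)) by (rewrite (proj1 (fsc _ _ E2)); exact E1).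
    apply f_inj; rewrite fc, fc, fc, fc by assumption.
    apply ass; apply comp; assumption.
  - intro a; apply f_inj; rewrite fc, fe, ft by (apply g_inj; rewrite fs, fe, se; reflexivity).
    apply idl.
  - intro a; apply f_inj; rewrite fc, fe, fs by (apply g_inj; rewrite ft, fe, te; reflexivity).
    apply idr.
  - intro a; destruct (si (f a)) as [E1 E2].
    split; apply g_inj; rewrite ?fs, ?ft, fi; assumption.
  - intro a; apply f_inj.
    rewrite fc, fi, fe, fs by (apply g_inj; rewrite fs, fi, (proj1 (si _)), ft; reflexivity).
    apply invl.
  - intro a; apply f_inj.
    rewrite fc, fi, fe, ft by (apply g_inj; rewrite ft, fi, (proj2 (si _)), fs; reflexivity).
    apply invr.
Qed.

Lemma is_gpgd_transport {A O A' O'} {add zero neg addo zeroo nego s t e c i}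
  (add' : A' -> A' -> A') zero' neg' (addo' : O' -> O' -> O') zeroo' nego' s' t' e' c' i'
  (f : A' -> A) (g : O' -> O) :
  @is_gpgd A O add zero neg addo zeroo nego s t e c i ->
  (forall a b, f a = f b -> a = b) -> (forall x y, g x = g y -> x = y) ->
  (forall a b, f (add' a b) = add (f a) (f b)) -> f zero' = zero ->
  (forall a, f (neg' a) = neg (f a)) ->
  (forall x y, g (addo' x y) = addo (g x) (g y)) -> g zeroo' = zeroo ->
  (forall x, g (nego' x) = nego (g x)) ->
  (forall a, g (s' a) = s (f a)) -> (forall a, g (t' a) = t (f a)) ->
  (forall x, f (e' x) = e (g x)) -> (forall a, f (i' a) = i (f a)) ->
  (forall a b, t' a = s' b -> f (c' b a) = c (f b) (f a)) ->
  @is_gpgd A' O' add' zero' neg' addo' zeroo' nego' s' t' e' c' i'.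
Proof.
  intros GG f_inj g_inj f_add f0 f_neg g_add g0 g_neg fs ft fe fi fc.
  assert (comp : forall a b, t' a = s' b -> t (f a) = s (f b)).
  { intros a b E; rewrite <- ft, <- fs, E; reflexivity. }
  split; [|split; [|split; [|split; [|split; [|split; [|split]]]]]].
  - exact (is_group_transport (gpgd_grp GG) f_inj f_add f0 f_neg).
  - exact (is_group_transport (gpgd_grpO GG) g_inj g_add g0 g_neg).
  - exact (is_groupoid_transport (gpgd_groupoid GG) f_inj g_inj fs ft fe fi fc).
  - intros x y; apply g_inj; rewrite g_add, !fs, f_add; apply (gpgd_src_add GG).
  - intros x y; apply g_inj; rewrite g_add, !ft, f_add; apply (gpgd_tgt_add GG).
  - intros x y; apply f_inj; rewrite f_add, !fe, g_add; apply (gpgd_idn_add GG).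
  - intros x y; apply f_inj; rewrite f_add, !fi, f_add; apply (gpgd_inv_add GG).
  - intros a b a1 b1 E1 E2; apply f_inj.
    assert (E3 : t' (add' a a1) = s' (add' b b1)).
    { apply g_inj; rewrite ft, fs, !f_add, (gpgd_tgt_add GG), (gpgd_src_add GG), (comp _ _ E1),
        (comp _ _ E2); reflexivity. }
    rewrite (fc _ _ E3), !f_add, (fc _ _ E1), (fc _ _ E2).
    apply (gpgd_interchange GG); apply comp; assumption.
Qed.

Definition sd_add {A B} (addA : A -> A -> A) (addB : B -> B -> B) (act : B -> A -> A)
  (p q : A * B) : A * B :=
  (addA (fst p) (act (snd p) (fst q)), addB (snd p) (snd q)).
Definition sd_neg {A B} (nA : A -> A) (nB : B -> B) (act : B -> A -> A) (p : A * B) : A * B :=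
  (act (nB (snd p)) (nA (fst p)), nB (snd p)).

(* The groupoid on [A * B] of a crossed module [bd : A -> B]: an arrow [(a, b)] goes from [b]
   to [bd a + b]. *)
Definition xm_tgt {A B} (addB : B -> B -> B) (bd : A -> B) (p : A * B) : B :=
  addB (bd (fst p)) (snd p).
Definition xm_idn {A B} (zA : A) (b : B) : A * B := (zA, b).
Definition xm_cmp {A B} (addA : A -> A -> A) (q p : A * B) : A * B := (addA (fst q) (fst p), snd p).
Definition xm_inv {A B} (nA : A -> A) (addB : B -> B -> B) (bd : A -> B) (p : A * B) : A * B :=
  (nA (fst p), addB (bd (fst p)) (snd p)).

Section Semidirect.
Context {A B : Type} {addA : A -> A -> A} {zA : A} {nA : A -> A}
  {addB : B -> B -> B} {zB : B} {nB : B -> B} {act : B -> A -> A}.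
Hypotheses (GA : is_group addA zA nA) (GB : is_group addB zB nB)
  (act_add : forall b, is_ghom addA addA (act b)) (act0 : forall a, act zB a = a)
  (actD : forall b b1 a, act (addB b b1) a = act b (act b1 a)).

Lemma act_zero b : act b zA = zA. Proof. exact (ghom_zero GA GA (act_add b)). Qed.
Lemma act_neg b a : act b (nA a) = nA (act b a). Proof. exact (ghom_neg GA GA (act_add b) a). Qed.

Lemma semidirect_group : is_group (sd_add addA addB act) (zA, zB) (sd_neg nA nB act).
Proof.
  unfold sd_add, sd_neg.
  split; [|split; [|split; [|split]]]; [intros [a b] [a1 b1] [a2 b2] | intros [a b] ..]; simpl.
  - rewrite act_add, actD; group_simpl GA; group_simpl GB; reflexivity.
  - rewrite act0; group_simpl GA; group_simpl GB; reflexivity.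
  - rewrite act_zero; group_simpl GA; group_simpl GB; reflexivity.
  - rewrite <- act_add, (grp_addNl GA), act_zero, (grp_addNl GB); reflexivity.
  - rewrite <- actD, (grp_addNr GB), act0, (grp_addNr GA); reflexivity.
Qed.

Context {bd : A -> B}.
Hypotheses (bd_add : is_ghom addA addB bd)
  (bd_act : forall b a, bd (act b a) = addB (addB b (bd a)) (nB b))
  (peiffer : forall a a1, act (bd a) a1 = addA (addA a a1) (nA a)).

Lemma crossed_semidirect_gpgd :
  is_gpgd (sd_add addA addB act) (zA, zB) (sd_neg nA nB act) addB zB nB
    snd (xm_tgt addB bd) (xm_idn zA) (xm_cmp addA) (xm_inv nA addB bd).
Proof.
  assert (bd0 : bd zA = zB) by exact (ghom_zero GA GB bd_add).
  assert (bdN : forall a, bd (nA a) = nB (bd a)) by exact (ghom_neg GA GB bd_add).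
  assert (tgt_add : is_ghom (sd_add addA addB act) addB (xm_tgt addB bd)).
  { intros [a b] [a1 b1]; unfold xm_tgt, sd_add; simpl.
    rewrite bd_add, bd_act; group_simpl GB; reflexivity. }
  unfold xm_idn, xm_cmp, xm_inv.
  split; [exact semidirect_group|split; [exact GB|split; [|split; [|split; [|split; [|split]]]]]].
  - unfold xm_tgt.
    split; [|split; [|split; [|split; [|split; [|split; [|split; [|split]]]]]]]; simpl.
    + reflexivity.
    + intro x; rewrite bd0, (grp_add0l GB); reflexivity.
    + intros [a b] [a1 b1]; simpl; intro E; split; [reflexivity|].
      rewrite bd_add, <- E; group_simpl GB; reflexivity.
    + intros [a b] [a1 b1] [a2 b2]; simpl; intros; rewrite (grp_addA GA); reflexivity.
    + intros [a b]; simpl; rewrite (grp_add0l GA); reflexivity.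
    + intros [a b]; simpl; rewrite (grp_add0r GA); reflexivity.
    + intros [a b]; simpl; split; [reflexivity|]; rewrite bdN; group_simpl GB; reflexivity.
    + intros [a b]; simpl; rewrite (grp_addNl GA); reflexivity.
    + intros [a b]; simpl; rewrite (grp_addNr GA); reflexivity.
  - intros p q; reflexivity.
  - exact tgt_add.
  - intros x y; unfold sd_add; simpl; rewrite act_zero, (grp_add0l GA); reflexivity.
  - intros [a b] [a1 b1]; pose proof (tgt_add (a, b) (a1, b1)) as E.
    unfold xm_tgt, sd_add in *; simpl in *; rewrite E; f_equal.
    rewrite actD, peiffer, act_neg; group_simpl GA; reflexivity.
  - intros [a b] [a1 b1] [a2 b2] [a3 b3]; unfold xm_tgt, sd_add; simpl; intros E1 E2.
    f_equal; rewrite act_add, <- E1, actD, peiffer; group_simpl GA; reflexivity.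
Qed.

End Semidirect.

Definition obj_act (G H : GpGd) (act : Ar H -> Ar G -> Ar G) (y : Ob H) (x : Ob G) : Ob G :=
  src G (act (idn H y) (idn G x)).

(* The group structure on [Ob G * Ob H] of a derived action is forced: it is the semidirect
   product for the induced action [obj_act] on objects. *)
Lemma derived_semidirect_gpgd {G H : GpGd} {act : Ar H -> Ar G -> Ar G} :
  is_derived_action G H act ->
  is_gpgd (sd_add (addA G) (addA H) act) (zeroA G, zeroA H) (sd_neg (negA G) (negA H) act)
    (sd_add (addO G) (addO H) (obj_act G H act)) (zeroO G, zeroO H)
    (sd_neg (negO G) (negO H) (obj_act G H act))
    (fun p => (src G (fst p), src H (snd p))) (fun p => (tgt G (fst p), tgt H (snd p)))
    (fun x => (idn G (fst x), idn H (snd x)))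
    (fun q p => (cmp G (fst q) (fst p), cmp H (snd q) (snd p)))
    (fun p => (inv G (fst p), inv H (snd p))).
Proof.
  intros (_ & _ & _ & addP & zeroP & negP & HP).
  pose proof (gpgd_ax G) as GG; pose proof (gpgd_ax H) as HH.
  apply (is_gpgd_transport _ _ _ _ _ _ _ _ _ _ _ (fun p => p) (fun x => x) HP);
    try (intros; reflexivity); auto.
  - intros [x y] [x1 y1]; rewrite (gpgd_addoE HP); unfold sd_add, obj_act; simpl.
    rewrite (gpgd_src_add GG), (gpgd_src_add HH), !(gpgd_src_idn GG), !(gpgd_src_idn HH).
    reflexivity.
  - rewrite (gpgd_zerooE HP); simpl; rewrite (gpgd_src0 GG), (gpgd_src0 HH); reflexivity.
  - intros [x y]; rewrite (gpgd_negoE HP); unfold sd_neg, obj_act; simpl.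
    rewrite (gpgd_idnN GG), (gpgd_idnN HH), (gpgd_srcN HH), (gpgd_src_idn HH); reflexivity.
Qed.

Definition sdprod {G H : GpGd} {act : Ar H -> Ar G -> Ar G} (Hact : is_derived_action G H act) :
  GpGd := MkGpGd (derived_semidirect_gpgd Hact).

Section DerivedAction.
Context {G H : GpGd} {act : Ar H -> Ar G -> Ar G}.
Hypothesis Hact : is_derived_action G H act.

Lemma derived_act0 a : act (zeroA H) a = a. Proof. apply Hact. Qed.
Lemma derived_actD b b1 a : act (addA H b b1) a = act b (act b1 a). Proof. apply Hact. Qed.
Lemma derived_act_add b : is_ghom (addA G) (addA G) (act b). Proof. intros a a1; apply Hact. Qed.

Lemma src_act b a : src G (act b a) = obj_act G H act (src H b) (src G a).
Proof.
  pose proof (gpgd_src_add (gpgd_ax (sdprod Hact)) (zeroA G, b) (a, zeroA H)) as E.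
  apply (f_equal fst) in E; simpl in E; unfold sd_add in E; simpl in E.
  rewrite (grp_add0l (gpgd_grp (gpgd_ax G))), (gpgd_src0 (gpgd_ax G)),
    (grp_add0l (gpgd_grpO (gpgd_ax G))) in E.
  exact E.
Qed.

Lemma obj_act_add y : is_ghom (addO G) (addO G) (obj_act G H act y).
Proof.
  intros x x1; unfold obj_act.
  rewrite (gpgd_idn_add (gpgd_ax G)), derived_act_add, (gpgd_src_add (gpgd_ax G)); reflexivity.
Qed.

Lemma obj_actD y y1 x :
  obj_act G H act (addO H y y1) x = obj_act G H act y (obj_act G H act y1 x).
Proof.
  unfold obj_act at 1.
  rewrite (gpgd_idn_add (gpgd_ax H)), derived_actD, src_act, (gpgd_src_idn (gpgd_ax H)).
  reflexivity.
Qed.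

Lemma obj_act0 x : obj_act G H act (zeroO H) x = x.
Proof.
  unfold obj_act; rewrite (gpgd_idn0 (gpgd_ax H)), derived_act0, (gpgd_src_idn (gpgd_ax G)).
  reflexivity.
Qed.

End DerivedAction.

Section CrossedModule.
Variable X : XModGG.

Let GG := gpgd_ax (XG X).
Let HH := gpgd_ax (XH X).

Lemma bd1_add : is_ghom (addA (XG X)) (addA (XH X)) (bd1 X). Proof. apply (bd_mor X). Qed.
Lemma bd0_add : is_ghom (addO (XG X)) (addO (XH X)) (bd0 X). Proof. apply (bd_mor X). Qed.
Lemma bd1_src a : src (XH X) (bd1 X a) = bd0 X (src (XG X) a). Proof. apply (bd_mor X). Qed.
Lemma bd1_tgt a : tgt (XH X) (bd1 X a) = bd0 X (tgt (XG X) a). Proof. apply (bd_mor X). Qed.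
Lemma bd1_idn x : bd1 X (idn (XG X) x) = idn (XH X) (bd0 X x). Proof. apply (bd_mor X). Qed.
Lemma bd1_cmp a b : tgt (XG X) a = src (XG X) b ->
  bd1 X (cmp (XG X) b a) = cmp (XH X) (bd1 X b) (bd1 X a).
Proof. apply (bd_mor X). Qed.

Lemma obj_act_bd y x :
  bd0 X (obj_act (XG X) (XH X) (xact X) y x) =
  addO (XH X) (addO (XH X) y (bd0 X x)) (negO (XH X) y).
Proof.
  unfold obj_act; rewrite <- bd1_src, (xm1 X), !(gpgd_src_add HH), (gpgd_srcN HH),
    (gpgd_src_idn HH), bd1_src, (gpgd_src_idn GG).
  reflexivity.
Qed.

Lemma obj_act_peiffer x x1 :
  obj_act (XG X) (XH X) (xact X) (bd0 X x) x1 = addO (XG X) (addO (XG X) x x1) (negO (XG X) x).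
Proof.
  unfold obj_act.
  rewrite <- bd1_idn, (xm2 X), !(gpgd_src_add GG), (gpgd_srcN GG), !(gpgd_src_idn GG).
  reflexivity.
Qed.

End CrossedModule.

Definition xmod_square (X : XModGG) : GpGd := sdprod (xact_derived X).

Section DGGOfXMod.
Variable X : XModGG.

Let GG := gpgd_ax (XG X).
Let HH := gpgd_ax (XH X).
Let S := xmod_square X.

Lemma xmod_hor_ar :
  is_gpgd (addA S) (zeroA S) (negA S) (addA (XH X)) (zeroA (XH X)) (negA (XH X))
    snd (xm_tgt (addA (XH X)) (bd1 X)) (xm_idn (zeroA (XG X))) (xm_cmp (addA (XG X)))
    (xm_inv (negA (XG X)) (addA (XH X)) (bd1 X)).
Proof.
  exact (crossed_semidirect_gpgd (gpgd_grp GG) (gpgd_grp HH) (derived_act_add (xact_derived X))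
    (derived_act0 (xact_derived X)) (derived_actD (xact_derived X)) (bd1_add X) (xm1 X) (xm2 X)).
Qed.

Lemma xmod_hor_ob :
  is_gpgd (addO S) (zeroO S) (negO S) (addO (XH X)) (zeroO (XH X)) (negO (XH X))
    snd (xm_tgt (addO (XH X)) (bd0 X)) (xm_idn (zeroO (XG X))) (xm_cmp (addO (XG X)))
    (xm_inv (negO (XG X)) (addO (XH X)) (bd0 X)).
Proof.
  exact (crossed_semidirect_gpgd (gpgd_grpO GG) (gpgd_grpO HH) (obj_act_add (xact_derived X))
    (obj_act0 (xact_derived X)) (obj_actD (xact_derived X)) (bd0_add X) (obj_act_bd X)
    (obj_act_peiffer X)).
Qed.

Lemma xmod_src_mor : is_gpgd_mor S (XH X) snd snd.
Proof.
  split; [|split; [|split; [|split; [|split]]]]; intro; intros; reflexivity.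
Qed.

Lemma xmod_tgt_mor :
  is_gpgd_mor S (XH X) (xm_tgt (addA (XH X)) (bd1 X)) (xm_tgt (addO (XH X)) (bd0 X)).
Proof.
  unfold xm_tgt; split; [|split; [|split; [|split; [|split]]]].
  - exact (gpgd_tgt_add xmod_hor_ar).
  - exact (gpgd_tgt_add xmod_hor_ob).
  - intros [a b]; simpl; rewrite (gpgd_src_add HH), bd1_src; reflexivity.
  - intros [a b]; simpl; rewrite (gpgd_tgt_add HH), bd1_tgt; reflexivity.
  - intros [x y]; simpl; rewrite bd1_idn, (gpgd_idn_add HH); reflexivity.
  - intros [a b] [a' b'] E; injection E as E1 E2; simpl.
    rewrite (bd1_cmp X _ _ E1); symmetry; apply (gpgd_interchange HH); [|exact E2].
    rewrite bd1_tgt, bd1_src, E1; reflexivity.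
Qed.

Lemma xmod_idn_mor : is_gpgd_mor (XH X) S (xm_idn (zeroA (XG X))) (xm_idn (zeroO (XG X))).
Proof.
  unfold xm_idn; split; [|split; [|split; [|split; [|split]]]].
  - exact (gpgd_idn_add xmod_hor_ar).
  - exact (gpgd_idn_add xmod_hor_ob).
  - intro b; simpl; rewrite (gpgd_src0 GG); reflexivity.
  - intro b; simpl; rewrite (gpgd_tgt0 GG); reflexivity.
  - intro y; simpl; rewrite (gpgd_idn0 GG); reflexivity.
  - intros b b' _; simpl; rewrite (gpgd_cmp00 GG); reflexivity.
Qed.

Lemma xmod_comp_src u u' : src S (xm_cmp (addA (XG X)) u' u) =
  xm_cmp (addO (XG X)) (src S u') (src S u).
Proof. simpl; rewrite (gpgd_src_add GG); reflexivity. Qed.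

Lemma xmod_comp_tgt u u' : tgt S (xm_cmp (addA (XG X)) u' u) =
  xm_cmp (addO (XG X)) (tgt S u') (tgt S u).
Proof. simpl; rewrite (gpgd_tgt_add GG); reflexivity. Qed.

Lemma xmod_comp_idn v v' :
  xm_cmp (addA (XG X)) (idn S v') (idn S v) = idn S (xm_cmp (addO (XG X)) v' v).
Proof. simpl; rewrite (gpgd_idn_add GG); reflexivity. Qed.

Lemma xmod_interchange u u' w w' : tgt S u = src S w -> tgt S u' = src S w' ->
  cmp S (xm_cmp (addA (XG X)) w' w) (xm_cmp (addA (XG X)) u' u) =
  xm_cmp (addA (XG X)) (cmp S w' u') (cmp S w u).
Proof.
  destruct u as [a b], u' as [a' b'], w as [c d], w' as [c' d']; simpl.
  intros E1 E2; injection E1 as E1 _; injection E2 as E2 _.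
  rewrite (gpgd_interchange GG); auto.
Qed.

End DGGOfXMod.

Definition dgg_of_xmod (X : XModGG) : DGG :=
  MkDGG (xmod_hor_ar X) (xmod_hor_ob X) (xmod_src_mor X) (xmod_tgt_mor X) (xmod_idn_mor X)
    (fun u u' _ => xmod_comp_src X u u') (fun u u' _ => xmod_comp_tgt X u u')
    (fun v v' _ => xmod_comp_idn X v v') (fun u u' w w' _ _ => xmod_interchange X u u' w w').

Lemma sig_eq {A} {P : A -> Prop} (u v : {x | P x}) : proj1_sig u = proj1_sig v -> u = v.
Proof. apply eq_sig_hprop; intros; apply proof_irrelevance. Qed.

Section SubGroupGroupoid.
Context {G : GpGd}.

Record SubGpGd : Type := MkSubGpGd {
  in_ar : Ar G -> Prop; in_ob : Ob G -> Prop;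
  in_ar_add : forall a b, in_ar a -> in_ar b -> in_ar (addA G a b);
  in_ar_zero : in_ar (zeroA G);
  in_ar_neg : forall a, in_ar a -> in_ar (negA G a);
  in_ob_add : forall x y, in_ob x -> in_ob y -> in_ob (addO G x y);
  in_ob_zero : in_ob (zeroO G);
  in_ob_neg : forall x, in_ob x -> in_ob (negO G x);
  in_ob_src : forall a, in_ar a -> in_ob (src G a);
  in_ob_tgt : forall a, in_ar a -> in_ob (tgt G a);
  in_ar_idn : forall x, in_ob x -> in_ar (idn G x) }.

Variable S : SubGpGd.

Definition sub_add (u v : {a | in_ar S a}) : {a | in_ar S a} :=
  exist _ _ (in_ar_add S _ _ (proj2_sig u) (proj2_sig v)).
Definition sub_zero : {a | in_ar S a} := exist _ _ (in_ar_zero S).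
Definition sub_neg (u : {a | in_ar S a}) : {a | in_ar S a} :=
  exist _ _ (in_ar_neg S _ (proj2_sig u)).
Definition sub_addo (x y : {x | in_ob S x}) : {x | in_ob S x} :=
  exist _ _ (in_ob_add S _ _ (proj2_sig x) (proj2_sig y)).
Definition sub_zeroo : {x | in_ob S x} := exist _ _ (in_ob_zero S).
Definition sub_nego (x : {x | in_ob S x}) : {x | in_ob S x} :=
  exist _ _ (in_ob_neg S _ (proj2_sig x)).
Definition sub_src (u : {a | in_ar S a}) : {x | in_ob S x} :=
  exist _ _ (in_ob_src S _ (proj2_sig u)).
Definition sub_tgt (u : {a | in_ar S a}) : {x | in_ob S x} :=
  exist _ _ (in_ob_tgt S _ (proj2_sig u)).
Definition sub_idn (x : {x | in_ob S x}) : {a | in_ar S a} :=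
  exist _ _ (in_ar_idn S _ (proj2_sig x)).

(* Closure under composition and inverses comes for free, by [gpgd_cmpE] and [gpgd_invE]. *)
Definition sub_cmp (v u : {a | in_ar S a}) : {a | in_ar S a} :=
  sub_add v (sub_add (sub_neg (sub_idn (sub_src v))) u).
Definition sub_inv (u : {a | in_ar S a}) : {a | in_ar S a} :=
  sub_add (sub_idn (sub_src u)) (sub_add (sub_neg u) (sub_idn (sub_tgt u))).

Lemma sub_cmp_val v u : tgt G (proj1_sig u) = src G (proj1_sig v) ->
  proj1_sig (sub_cmp v u) = cmp G (proj1_sig v) (proj1_sig u).
Proof. intro E; symmetry; exact (gpgd_cmpE (gpgd_ax G) _ _ E). Qed.

Lemma sub_gpgd_ax :
  is_gpgd sub_add sub_zero sub_neg sub_addo sub_zeroo sub_nego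
    sub_src sub_tgt sub_idn sub_cmp sub_inv.
Proof.
  apply (is_gpgd_transport _ _ _ _ _ _ _ _ _ _ _ (@proj1_sig _ _) (@proj1_sig _ _) (gpgd_ax G));
    try (intros; reflexivity); try exact sig_eq.
  - intros a; symmetry; exact (gpgd_invE (gpgd_ax G) _).
  - intros a b E; apply sub_cmp_val; apply (f_equal (@proj1_sig _ _)) in E; exact E.
Qed.

Definition sub_gpgd : GpGd := MkGpGd sub_gpgd_ax.

End SubGroupGroupoid.

Section DGGKernel.
Variable D : DGG.

Let SG := gpgd_ax (SV D).
Let HG := gpgd_ax (HP D).
Let SH := ax_SH D.
Let VP := ax_VP D.

Lemma hs_src u : src (HP D) (hs D u) = os D (src (SV D) u). Proof. apply (d0_mor D). Qed.
Lemma hs_tgt u : tgt (HP D) (hs D u) = os D (tgt (SV D) u). Proof. apply (d0_mor D). Qed.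
Lemma hs_idn x : hs D (idn (SV D) x) = idn (HP D) (os D x). Proof. apply (d0_mor D). Qed.
Lemma ht_src u : src (HP D) (ht D u) = ot D (src (SV D) u). Proof. apply (d1_mor D). Qed.
Lemma ht_tgt u : tgt (HP D) (ht D u) = ot D (tgt (SV D) u). Proof. apply (d1_mor D). Qed.
Lemma ht_idn x : ht D (idn (SV D) x) = idn (HP D) (ot D x). Proof. apply (d1_mor D). Qed.
Lemma ht_cmp u v : tgt (SV D) u = src (SV D) v ->
  ht D (cmp (SV D) v u) = cmp (HP D) (ht D v) (ht D u).
Proof. apply (d1_mor D). Qed.
Lemma he_src b : src (SV D) (he D b) = oe D (src (HP D) b). Proof. apply (eps_mor D). Qed.
Lemma he_tgt b : tgt (SV D) (he D b) = oe D (tgt (HP D) b). Proof. apply (eps_mor D). Qed.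
Lemma he_idn y : he D (idn (HP D) y) = idn (SV D) (oe D y). Proof. apply (eps_mor D). Qed.
Lemma he_cmp b b' : tgt (HP D) b = src (HP D) b' ->
  he D (cmp (HP D) b' b) = cmp (SV D) (he D b') (he D b).
Proof. apply (eps_mor D). Qed.
Lemma he_inv b : he D (inv (HP D) b) = inv (SV D) (he D b).
Proof. exact (mor_inv (eps_mor D) b). Qed.

Definition dgg_ker_spec : @SubGpGd (SV D).
Proof.
  refine (MkSubGpGd (fun u => hs D u = zeroA (HP D)) (fun v => os D v = zeroO (HP D))
    _ _ _ _ _ _ _ _ _).
  - intros a b Ha Hb; rewrite (gpgd_src_add SH), Ha, Hb; apply (grp_add0l (gpgd_grp HG)).
  - apply (gpgd_src0 SH).
  - intros a Ha; rewrite (gpgd_srcN SH), Ha; apply (grp_neg0 (gpgd_grp HG)).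
  - intros x y Hx Hy; rewrite (gpgd_src_add VP), Hx, Hy; apply (grp_add0l (gpgd_grpO HG)).
  - apply (gpgd_src0 VP).
  - intros x Hx; rewrite (gpgd_srcN VP), Hx; apply (grp_neg0 (gpgd_grpO HG)).
  - intros a Ha; rewrite <- hs_src, Ha; apply (gpgd_src0 HG).
  - intros a Ha; rewrite <- hs_tgt, Ha; apply (gpgd_tgt0 HG).
  - intros x Hx; rewrite hs_idn, Hx; apply (gpgd_idn0 HG).
Defined.

Definition dgg_ker : GpGd := sub_gpgd dgg_ker_spec.

Lemma ker_cmpE (v u : Ar dgg_ker) : tgt (SV D) (proj1_sig u) = src (SV D) (proj1_sig v) ->
  proj1_sig (cmp dgg_ker v u) = cmp (SV D) (proj1_sig v) (proj1_sig u).
Proof. exact (sub_cmp_val dgg_ker_spec v u). Qed.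

Lemma ker_conj_pf b u : hs D u = zeroA (HP D) ->
  hs D (addA (SV D) (he D b) (addA (SV D) u (negA (SV D) (he D b)))) = zeroA (HP D).
Proof.
  intro Hu; rewrite !(gpgd_src_add SH), (gpgd_srcN SH), (gpgd_src_idn SH), Hu.
  group_simpl (gpgd_grp HG); reflexivity.
Qed.

Definition ker_act (b : Ar (HP D)) (u : Ar dgg_ker) : Ar dgg_ker :=
  exist _ _ (ker_conj_pf b _ (proj2_sig u)).
Definition ker_bd1 (u : Ar dgg_ker) : Ar (HP D) := ht D (proj1_sig u).
Definition ker_bd0 (v : Ob dgg_ker) : Ob (HP D) := ot D (proj1_sig v).

(* [S] splits as [Ker d0 * H] on arrows and [Ker d0 * P] on objects. *)
Definition ker_join_ar (p : Ar dgg_ker * Ar (HP D)) : Ar (SV D) :=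
  addA (SV D) (proj1_sig (fst p)) (he D (snd p)).
Definition ker_join_ob (p : Ob dgg_ker * Ob (HP D)) : Ob (SV D) :=
  addO (SV D) (proj1_sig (fst p)) (oe D (snd p)).

Lemma ker_join_ar_inj p q : ker_join_ar p = ker_join_ar q -> p = q.
Proof.
  destruct p as [[a pa] b], q as [[a1 pa1] b1]; unfold ker_join_ar; simpl in *; intro E.
  assert (Eb : b = b1).
  { apply (f_equal (hs D)) in E.
    rewrite !(gpgd_src_add SH), !(gpgd_src_idn SH), pa, pa1, !(grp_add0l (gpgd_grp HG)) in E.
    exact E. }
  subst b1; f_equal; apply sig_eq; exact (grp_addIr (gpgd_grp SG) _ _ _ E).
Qed.

Lemma ker_join_ob_inj p q : ker_join_ob p = ker_join_ob q -> p = q.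
Proof.
  destruct p as [[x px] y], q as [[x1 px1] y1]; unfold ker_join_ob; simpl in *; intro E.
  assert (Ey : y = y1).
  { apply (f_equal (os D)) in E.
    rewrite !(gpgd_src_add VP), !(gpgd_src_idn VP), px, px1, !(grp_add0l (gpgd_grpO HG)) in E.
    exact E. }
  subst y1; f_equal; apply sig_eq; exact (grp_addIr (gpgd_grpO SG) _ _ _ E).
Qed.

Lemma ker_join_ar_add p q :
  ker_join_ar (sd_add (addA dgg_ker) (addA (HP D)) ker_act p q) =
  addA (SV D) (ker_join_ar p) (ker_join_ar q).
Proof.
  destruct p as [[a pa] b], q as [[a1 pa1] b1]; unfold ker_join_ar, sd_add; simpl.
  rewrite (gpgd_idn_add SH); group_simpl (gpgd_grp SG); reflexivity.
Qed.

Lemma ker_join_ob_add p q :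
  ker_join_ob (sd_add (addO dgg_ker) (addO (HP D)) (obj_act dgg_ker (HP D) ker_act) p q) =
  addO (SV D) (ker_join_ob p) (ker_join_ob q).
Proof.
  destruct p as [x y], q as [x1 y1]; unfold ker_join_ob, sd_add.
  unfold obj_act; simpl.
  rewrite !(gpgd_src_add SG), (gpgd_srcN SG), he_idn, !(gpgd_src_idn SG), (gpgd_idn_add VP).
  group_simpl (gpgd_grpO SG); reflexivity.
Qed.

Lemma ker_join_ar_cmp p q :
  (tgt dgg_ker (fst p), tgt (HP D) (snd p)) = (src dgg_ker (fst q), src (HP D) (snd q)) ->
  ker_join_ar (cmp dgg_ker (fst q) (fst p), cmp (HP D) (snd q) (snd p)) =
  cmp (SV D) (ker_join_ar q) (ker_join_ar p).
Proof.
  destruct p as [[a pa] b], q as [[a1 pa1] b1]; intro E; injection E as E1 E2.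
  cbn [fst snd proj1_sig] in E1, E2.
  unfold ker_join_ar; cbn [fst snd].
  rewrite ker_cmpE by exact E1; cbn [proj1_sig]; rewrite (he_cmp _ _ E2).
  symmetry; apply (gpgd_interchange SG); [exact E1|].
  rewrite he_tgt, he_src, E2; reflexivity.
Qed.

Lemma ker_join_ar_inv p :
  ker_join_ar (inv dgg_ker (fst p), inv (HP D) (snd p)) = inv (SV D) (ker_join_ar p).
Proof.
  destruct p as [[a pa] b]; unfold ker_join_ar; simpl.
  rewrite he_inv, (gpgd_inv_add SG); f_equal; symmetry; apply (gpgd_invE SG).
Qed.

Lemma ker_join_src p :
  ker_join_ob (src dgg_ker (fst p), src (HP D) (snd p)) = src (SV D) (ker_join_ar p).
Proof.
  destruct p as [[a pa] b]; unfold ker_join_ar, ker_join_ob; simpl.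
  rewrite (gpgd_src_add SG), he_src; reflexivity.
Qed.
Lemma ker_join_tgt p :
  ker_join_ob (tgt dgg_ker (fst p), tgt (HP D) (snd p)) = tgt (SV D) (ker_join_ar p).
Proof.
  destruct p as [[a pa] b]; unfold ker_join_ar, ker_join_ob; simpl.
  rewrite (gpgd_tgt_add SG), he_tgt; reflexivity.
Qed.
Lemma ker_join_idn x :
  ker_join_ar (idn dgg_ker (fst x), idn (HP D) (snd x)) = idn (SV D) (ker_join_ob x).
Proof.
  destruct x as [[x px] y]; unfold ker_join_ar, ker_join_ob; simpl.
  rewrite (gpgd_idn_add SG), he_idn; reflexivity.
Qed.

Lemma ker_derived_action : is_derived_action dgg_ker (HP D) ker_act.
Proof.
  pose proof (gpgd_grp SG) as GS.
  split; [|split; [|split]].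
  - intros [a pa]; apply sig_eq; simpl; rewrite (gpgd_idn0 SH); group_simpl GS; reflexivity.
  - intros b b1 [a pa]; apply sig_eq; simpl; rewrite (gpgd_idn_add SH); group_simpl GS; reflexivity.
  - intros b [a pa] [a1 pa1]; apply sig_eq; simpl; group_simpl GS; reflexivity.
  - exists (sd_add (addO dgg_ker) (addO (HP D)) (obj_act dgg_ker (HP D) ker_act)),
      (zeroO dgg_ker, zeroO (HP D)),
      (sd_neg (negO dgg_ker) (negO (HP D)) (obj_act dgg_ker (HP D) ker_act)).
    apply (is_gpgd_transport _ _ _ _ _ _ _ _ _ _ _ ker_join_ar ker_join_ob SG ker_join_ar_inj
      ker_join_ob_inj ker_join_ar_add).
    + unfold ker_join_ar; simpl; rewrite (gpgd_idn0 SH); group_simpl GS; reflexivity.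
    + intros [[a pa] b]; unfold ker_join_ar, sd_neg; simpl.
      rewrite (gpgd_idnN SH); group_simpl GS; reflexivity.
    + exact ker_join_ob_add.
    + unfold ker_join_ob; simpl; rewrite (gpgd_idn0 VP); group_simpl (gpgd_grpO SG); reflexivity.
    + intros [[x px] y]; unfold ker_join_ob, sd_neg, obj_act; simpl.
      rewrite !(gpgd_src_add SG), !(gpgd_srcN SG), he_idn, !(gpgd_src_idn SG), (gpgd_idnN VP).
      group_simpl (gpgd_grpO SG); reflexivity.
    + exact ker_join_src.
    + exact ker_join_tgt.
    + exact ker_join_idn.
    + exact ker_join_ar_inv.
    + exact ker_join_ar_cmp.
Qed.

Lemma ker_bd_mor : is_gpgd_mor dgg_ker (HP D) ker_bd1 ker_bd0.
Proof.
  unfold ker_bd1, ker_bd0; split; [|split; [|split; [|split; [|split]]]].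
  - intros [a pa] [a1 pa1]; apply (gpgd_tgt_add SH).
  - intros [x px] [x1 px1]; apply (gpgd_tgt_add VP).
  - intros [a pa]; apply ht_src.
  - intros [a pa]; apply ht_tgt.
  - intros [x px]; apply ht_idn.
  - intros [a pa] [a1 pa1] E; injection E as E.
    rewrite ker_cmpE by exact E; apply ht_cmp, E.
Qed.

Lemma ker_bd_act b u :
  ker_bd1 (ker_act b u) = addA (HP D) (addA (HP D) b (ker_bd1 u)) (negA (HP D) b).
Proof.
  unfold ker_bd1; simpl; rewrite !(gpgd_tgt_add SH), (gpgd_tgtN SH), (gpgd_tgt_idn SH).
  group_simpl (gpgd_grp HG); reflexivity.
Qed.

(* The Peiffer identity is where the two kernels commute: [u] has [hs u = 0], and
   [- he (ht v) + v] has [ht = 0]. *)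
Lemma ker_peiffer u v :
  ker_act (ker_bd1 u) v = addA dgg_ker (addA dgg_ker u v) (negA dgg_ker u).
Proof.
  pose proof (gpgd_grp SG) as GS.
  destruct u as [a pa], v as [a1 pa1]; apply sig_eq; unfold ker_bd1; simpl.
  set (e := he D (ht D a)).
  assert (Hw : ht D (addA (SV D) (negA (SV D) e) a) = zeroA (HP D)).
  { unfold e; rewrite (gpgd_tgt_add SH), (gpgd_tgtN SH), (gpgd_tgt_idn SH).
    apply (grp_addNl (gpgd_grp HG)). }
  pose proof (gpgd_add_ker_comm SH a1 (addA (SV D) (negA (SV D) e) a) pa1 Hw) as Hc.
  apply (grp_addIr GS a); group_simpl GS; rewrite Hc; group_simpl GS; reflexivity.
Qed.

End DGGKernel.

Definition xmod_of_dgg (D : DGG) : XModGG :=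
  MkXModGG (ker_derived_action D) (ker_bd_mor D) (ker_bd_act D) (ker_peiffer D).

Definition prod_map {A B A' B'} (f : A -> A') (g : B -> B') (p : A * B) : A' * B' :=
  (f (fst p), g (snd p)).

Section SemidirectMorphism.
Context {A B A' B' : Type} {addA : A -> A -> A} {addB : B -> B -> B} {act : B -> A -> A}
  {addA' : A' -> A' -> A'} {addB' : B' -> B' -> B'} {act' : B' -> A' -> A'}
  {fa : A -> A'} {fb : B -> B'}.
Hypotheses (fa_add : is_ghom addA addA' fa) (fb_add : is_ghom addB addB' fb)
  (f_act : forall b a, fa (act b a) = act' (fb b) (fa a)).

Lemma sd_add_mor : is_ghom (sd_add addA addB act) (sd_add addA' addB' act') (prod_map fa fb).
Proof.
  intros [a b] [a1 b1]; unfold prod_map, sd_add; simpl; rewrite fa_add, fb_add, f_act; reflexivity.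
Qed.

Context {zA : A} {nA : A -> A} {bd : A -> B} {zA' : A'} {nA' : A' -> A'} {bd' : A' -> B'}.
Hypotheses (GA : is_group addA zA nA) (GA' : is_group addA' zA' nA')
  (f_bd : forall a, fb (bd a) = bd' (fa a)).

Lemma crossed_semidirect_mor :
  is_gg_mor (sd_add addA addB act) addB snd (xm_tgt addB bd) (xm_idn zA) (xm_cmp addA)
    (sd_add addA' addB' act') addB' snd (xm_tgt addB' bd') (xm_idn zA') (xm_cmp addA')
    (prod_map fa fb) fb.
Proof.
  unfold prod_map, xm_tgt, xm_idn, xm_cmp.
  split; [exact sd_add_mor|split; [exact fb_add|split; [|split; [|split]]]].
  - intros [a b]; reflexivity.
  - intros [a b]; simpl; rewrite fb_add, f_bd; reflexivity.
  - intro b; simpl; rewrite (ghom_zero GA GA' fa_add); reflexivity.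
  - intros [a b] [a1 b1] _; simpl; rewrite fa_add; reflexivity.
Qed.

End SemidirectMorphism.

Lemma mor_obj_act {G H G' H' : GpGd} {act act'} {fa fo ga go}
  (Mf : is_gpgd_mor G G' fa fo) (Mg : is_gpgd_mor H H' ga go)
  (f_act : forall b a, fa (act b a) = act' (ga b) (fa a)) y x :
  fo (obj_act G H act y x) = obj_act G' H' act' (go y) (fo x).
Proof. unfold obj_act; rewrite <- (mor_src Mf), f_act, (mor_idn Mf), (mor_idn Mg); reflexivity. Qed.

Lemma sdprod_mor {G H G' H' : GpGd} {act act'} (Hact : is_derived_action G H act)
  (Hact' : is_derived_action G' H' act') {fa fo ga go}
  (Mf : is_gpgd_mor G G' fa fo) (Mg : is_gpgd_mor H H' ga go)
  (f_act : forall b a, fa (act b a) = act' (ga b) (fa a)) :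
  is_gpgd_mor (sdprod Hact) (sdprod Hact') (prod_map fa ga) (prod_map fo go).
Proof.
  unfold prod_map; split; [|split; [|split; [|split; [|split]]]].
  - exact (sd_add_mor (mor_add Mf) (mor_add Mg) f_act).
  - exact (sd_add_mor (mor_addO Mf) (mor_addO Mg) (mor_obj_act Mf Mg f_act)).
  - intros [a b]; simpl; rewrite (mor_src Mf), (mor_src Mg); reflexivity.
  - intros [a b]; simpl; rewrite (mor_tgt Mf), (mor_tgt Mg); reflexivity.
  - intros [x y]; simpl; rewrite (mor_idn Mf), (mor_idn Mg); reflexivity.
  - intros [a b] [a1 b1] E; injection E as E1 E2; simpl.
    rewrite (mor_cmp Mf _ _ E1), (mor_cmp Mg _ _ E2); reflexivity.
Qed.

Lemma dgg_mor_intro (D E : DGG) fs fh fv fp :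
  is_gpgd_mor (SV D) (SV E) fs fv -> is_gpgd_mor (HP D) (HP E) fh fp ->
  is_gg_mor (addA (SV D)) (addA (HP D)) (hs D) (ht D) (he D) (hc D)
            (addA (SV E)) (addA (HP E)) (hs E) (ht E) (he E) (hc E) fs fh ->
  is_gg_mor (addO (SV D)) (addO (HP D)) (os D) (ot D) (oe D) (oc D)
            (addO (SV E)) (addO (HP E)) (os E) (ot E) (oe E) (oc E) fv fp ->
  is_dgg_mor D E fs fh fv fp.
Proof.
  intros MS MH MSH MVP.
  split; [exact MS|split; [exact (mor_inv MS)|split; [exact MH|split; [exact (mor_inv MH)|]]]].
  split; [exact MSH|split; [exact (gg_mor_inv (ax_SH D) (ax_SH E) _ _ MSH)|]].
  split; [exact MVP|exact (gg_mor_inv (ax_VP D) (ax_VP E) _ _ MVP)].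
Qed.

Definition dhom_of_xhom (X Y : XModGG) (f : XHom X Y) : DHom (dgg_of_xmod X) (dgg_of_xmod Y).
Proof.
  refine (@MkDHom (dgg_of_xmod X) (dgg_of_xmod Y) (prod_map (hfa f) (hga f)) (hga f)
    (prod_map (hfo f) (hgo f)) (hgo f)
    (dgg_mor_intro (dgg_of_xmod X) (dgg_of_xmod Y) _ _ _ _ _ (hg_mor f) _ _)).
  - exact (sdprod_mor _ _ (hf_mor f) (hg_mor f) (h_act f)).
  - exact (crossed_semidirect_mor (mor_add (hf_mor f)) (mor_add (hg_mor f)) (h_act f)
      (gpgd_grp (gpgd_ax (XG X))) (gpgd_grp (gpgd_ax (XG Y))) (h_comm1 f)).
  - exact (crossed_semidirect_mor (mor_addO (hf_mor f)) (mor_addO (hg_mor f))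
      (mor_obj_act (hf_mor f) (hg_mor f) (h_act f))
      (gpgd_grpO (gpgd_ax (XG X))) (gpgd_grpO (gpgd_ax (XG Y))) (h_comm0 f)).
Defined.

Section DHomParts.
Context {D E : DGG} (f : DHom D E).

Lemma dhom_SV : is_gpgd_mor (SV D) (SV E) (dfs f) (dfv f). Proof. apply (dmor f). Qed.
Lemma dhom_HP : is_gpgd_mor (HP D) (HP E) (dfh f) (dfp f). Proof. apply (dmor f). Qed.
Lemma dhom_hs u : hs E (dfs f u) = dfh f (hs D u). Proof. apply (dmor f). Qed.
Lemma dhom_ht u : ht E (dfs f u) = dfh f (ht D u). Proof. apply (dmor f). Qed.
Lemma dhom_he b : dfs f (he D b) = he E (dfh f b). Proof. apply (dmor f). Qed.
Lemma dhom_os v : os E (dfv f v) = dfp f (os D v). Proof. apply (dmor f). Qed.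
Lemma dhom_ot v : ot E (dfv f v) = dfp f (ot D v). Proof. apply (dmor f). Qed.
Lemma dhom_oe y : dfv f (oe D y) = oe E (dfp f y). Proof. apply (dmor f). Qed.

Lemma dhom_ker_ar_pf (u : Ar (dgg_ker D)) : hs E (dfs f (proj1_sig u)) = zeroA (HP E).
Proof. rewrite dhom_hs, (proj2_sig u); exact (mor_zero dhom_HP). Qed.
Lemma dhom_ker_ob_pf (x : Ob (dgg_ker D)) : os E (dfv f (proj1_sig x)) = zeroO (HP E).
Proof. rewrite dhom_os, (proj2_sig x); exact (mor_zeroO dhom_HP). Qed.

Definition dhom_ker_ar (u : Ar (dgg_ker D)) : Ar (dgg_ker E) := exist _ _ (dhom_ker_ar_pf u).
Definition dhom_ker_ob (x : Ob (dgg_ker D)) : Ob (dgg_ker E) := exist _ _ (dhom_ker_ob_pf x).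

Lemma dhom_ker_mor : is_gpgd_mor (dgg_ker D) (dgg_ker E) dhom_ker_ar dhom_ker_ob.
Proof.
  pose proof dhom_SV as M.
  split; [|split; [|split; [|split; [|split]]]].
  - intros u v; apply sig_eq; apply (mor_add M).
  - intros x y; apply sig_eq; apply (mor_addO M).
  - intro u; apply sig_eq; apply (mor_src M).
  - intro u; apply sig_eq; apply (mor_tgt M).
  - intro x; apply sig_eq; apply (mor_idn M).
  - intros u v E'; apply sig_eq; simpl.
    rewrite !(mor_add M), (mor_neg M), (mor_idn M), (mor_src M); reflexivity.
Qed.

Lemma dhom_ker_act b u :
  dhom_ker_ar (ker_act D b u) = ker_act E (dfh f b) (dhom_ker_ar u).
Proof.
  apply sig_eq; simpl; rewrite !(mor_add dhom_SV), (mor_neg dhom_SV), dhom_he; reflexivity.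
Qed.

End DHomParts.

Definition xhom_of_dhom (D E : DGG) (f : DHom D E) : XHom (xmod_of_dgg D) (xmod_of_dgg E) :=
  MkXHom (xmod_of_dgg D) (xmod_of_dgg E) (dhom_ker_mor f) (dhom_HP f)
    (fun u => eq_sym (dhom_ht f (proj1_sig u))) (fun x => eq_sym (dhom_ot f (proj1_sig x)))
    (dhom_ker_act f).

Definition xhom_rev {X Y : XModGG} (f : XHom X Y) (fa' : Ar (XG Y) -> Ar (XG X))
  (fo' : Ob (XG Y) -> Ob (XG X)) (ga' : Ar (XH Y) -> Ar (XH X)) (go' : Ob (XH Y) -> Ob (XH X))
  (Ka : forall a, fa' (hfa f a) = a) (Ka' : forall a, hfa f (fa' a) = a)
  (Ko : forall x, fo' (hfo f x) = x) (Ko' : forall x, hfo f (fo' x) = x)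
  (Kb : forall b, ga' (hga f b) = b) (Kb' : forall b, hga f (ga' b) = b)
  (Ky : forall y, go' (hgo f y) = y) (Ky' : forall y, hgo f (go' y) = y) : XHom Y X.
Proof.
  refine (MkXHom Y X (gg_mor_rev _ _ _ _ _ _ _ _ _ _ _ _ _ _ _ _ (hf_mor f) Ka Ka' Ko Ko')
    (gg_mor_rev _ _ _ _ _ _ _ _ _ _ _ _ _ _ _ _ (hg_mor f) Kb Kb' Ky Ky') _ _ _).
  - intro a; rewrite <- (Ka' a) at 1; rewrite <- (h_comm1 f), Kb; reflexivity.
  - intro x; rewrite <- (Ko' x) at 1; rewrite <- (h_comm0 f), Ky; reflexivity.
  - intros b a; rewrite <- (Ka' a) at 1; rewrite <- (Kb' b) at 1; rewrite <- (h_act f), Ka.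
    reflexivity.
Defined.

Section Unit.
Variable X : XModGG.

Let GG := gpgd_ax (XG X).
Let HH := gpgd_ax (XH X).
Let XX := xmod_of_dgg (dgg_of_xmod X).

Definition unit_ar (a : Ar (XG X)) : Ar (XG XX) := exist _ (a, zeroA (XH X)) eq_refl.
Definition unit_ob (x : Ob (XG X)) : Ob (XG XX) := exist _ (x, zeroO (XH X)) eq_refl.

Lemma unit_mor : is_gpgd_mor (XG X) (XG XX) unit_ar unit_ob.
Proof.
  split; [|split; [|split; [|split; [|split]]]].
  - intros a a1; apply sig_eq; simpl; unfold sd_add; simpl.
    rewrite (derived_act0 (xact_derived X)), (grp_add0l (gpgd_grp HH)); reflexivity.
  - intros x x1; apply sig_eq; simpl; unfold sd_add; simpl.
    rewrite (obj_act0 (xact_derived X)), (grp_add0l (gpgd_grpO HH)); reflexivity.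
  - intro a; apply sig_eq; simpl; rewrite (gpgd_src0 HH); reflexivity.
  - intro a; apply sig_eq; simpl; rewrite (gpgd_tgt0 HH); reflexivity.
  - intro x; apply sig_eq; simpl; rewrite (gpgd_idn0 HH); reflexivity.
  - intros a b E; apply sig_eq.
    rewrite ker_cmpE by (simpl; rewrite E, (gpgd_tgt0 HH), (gpgd_src0 HH); reflexivity).
    simpl; rewrite (gpgd_cmp00 HH); reflexivity.
Qed.

Lemma unit_act b a : unit_ar (xact X b a) = xact XX b (unit_ar a).
Proof.
  pose proof (gpgd_grp GG) as GA; pose proof (xact_derived X) as Hact.
  apply sig_eq; simpl; unfold sd_add, sd_neg, xm_idn; simpl.
  rewrite (grp_neg0 GA), (act_zero GA (derived_act_add Hact)), (derived_act0 Hact),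
    (grp_add0l GA), (grp_add0r GA), (grp_add0l (gpgd_grp HH)), (grp_addNr (gpgd_grp HH)).
  reflexivity.
Qed.

Lemma unit_bd1 a : bd1 X a = bd1 XX (unit_ar a).
Proof. simpl; unfold ker_bd1, xm_tgt; simpl; rewrite (grp_add0r (gpgd_grp HH)); reflexivity. Qed.
Lemma unit_bd0 x : bd0 X x = bd0 XX (unit_ob x).
Proof. simpl; unfold ker_bd0, xm_tgt; simpl; rewrite (grp_add0r (gpgd_grpO HH)); reflexivity. Qed.

Definition xmod_unit : XHom X XX :=
  MkXHom X XX unit_mor (is_gg_mor_id _ _ _ _ _ _) unit_bd1 unit_bd0 unit_act.

Lemma unit_ar_fst u : unit_ar (fst (proj1_sig u)) = u.
Proof. destruct u as [[a b] Hb]; apply sig_eq; simpl in *; rewrite Hb; reflexivity. Qed.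
Lemma unit_ob_fst u : unit_ob (fst (proj1_sig u)) = u.
Proof. destruct u as [[x y] Hy]; apply sig_eq; simpl in *; rewrite Hy; reflexivity. Qed.

Definition xmod_unit_inv : XHom XX X :=
  xhom_rev xmod_unit (fun u => fst (proj1_sig u)) (fun u => fst (proj1_sig u)) (fun b => b)
    (fun y => y) (fun a => eq_refl) unit_ar_fst (fun x => eq_refl) unit_ob_fst
    (fun b => eq_refl) (fun b => eq_refl) (fun y => eq_refl) (fun y => eq_refl).

End Unit.

Lemma dgg_mor_rev {D E : DGG} {fs fh fv fp fs' fh' fv' fp'} :
  is_dgg_mor D E fs fh fv fp ->
  (forall a, fs' (fs a) = a) -> (forall a, fs (fs' a) = a) ->
  (forall b, fh' (fh b) = b) -> (forall b, fh (fh' b) = b) ->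
  (forall x, fv' (fv x) = x) -> (forall x, fv (fv' x) = x) ->
  (forall y, fp' (fp y) = y) -> (forall y, fp (fp' y) = y) ->
  is_dgg_mor E D fs' fh' fv' fp'.
Proof.
  intros (MS & _ & MH & _ & MSH & _ & MVP & _) Ks Ks' Kh Kh' Kv Kv' Kp Kp'.
  apply dgg_mor_intro.
  - exact (gg_mor_rev _ _ _ _ _ _ _ _ _ _ _ _ _ _ _ _ MS Ks Ks' Kv Kv').
  - exact (gg_mor_rev _ _ _ _ _ _ _ _ _ _ _ _ _ _ _ _ MH Kh Kh' Kp Kp').
  - exact (gg_mor_rev _ _ _ _ _ _ _ _ _ _ _ _ _ _ _ _ MSH Ks Ks' Kh Kh').
  - exact (gg_mor_rev _ _ _ _ _ _ _ _ _ _ _ _ _ _ _ _ MVP Kv Kv' Kp Kp').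
Qed.

Section Counit.
Variable D : DGG.

Let SG := gpgd_ax (SV D).
Let SH := ax_SH D.
Let VP := ax_VP D.
Let DD := dgg_of_xmod (xmod_of_dgg D).

Lemma counit_SV : is_gpgd_mor (SV DD) (SV D) (ker_join_ar D) (ker_join_ob D).
Proof.
  split; [exact (ker_join_ar_add D)|split; [exact (ker_join_ob_add D)|split; [|split; [|split]]]].
  - intro p; symmetry; exact (ker_join_src D p).
  - intro p; symmetry; exact (ker_join_tgt D p).
  - exact (ker_join_idn D).
  - exact (ker_join_ar_cmp D).
Qed.

Lemma counit_hor_ar :
  is_gg_mor (addA (SV DD)) (addA (HP DD)) (hs DD) (ht DD) (he DD) (hc DD)
            (addA (SV D)) (addA (HP D)) (hs D) (ht D) (he D) (hc D) (ker_join_ar D) (fun b => b).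
Proof.
  pose proof (gpgd_grp SG) as GS; pose proof (gpgd_grp (gpgd_ax (HP D))) as GH.
  unfold ker_join_ar; split; [exact (ker_join_ar_add D)|split; [intros b b1; reflexivity|]].
  split; [|split; [|split]].
  - intros [[a pa] b]; simpl.
    rewrite (gpgd_src_add SH), (gpgd_src_idn SH), pa; apply (grp_add0l GH).
  - intros [[a pa] b]; simpl; unfold xm_tgt, ker_bd1; simpl.
    rewrite (gpgd_tgt_add SH), (gpgd_tgt_idn SH); reflexivity.
  - intro b; simpl; apply (grp_add0l GS).
  - intros [[a pa] b] [[a1 pa1] b1]; simpl; unfold xm_tgt, ker_bd1; simpl; intro E.
    assert (Hs : hs D (addA (SV D) a1 (he D b1)) = b1).
    { rewrite (gpgd_src_add SH), (gpgd_src_idn SH), pa1; apply (grp_add0l GH). }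
    rewrite (gpgd_cmpE SH), Hs by (rewrite Hs, (gpgd_tgt_add SH), (gpgd_tgt_idn SH); exact E).
    group_simpl GS; reflexivity.
Qed.

Lemma counit_hor_ob :
  is_gg_mor (addO (SV DD)) (addO (HP DD)) (os DD) (ot DD) (oe DD) (oc DD)
            (addO (SV D)) (addO (HP D)) (os D) (ot D) (oe D) (oc D) (ker_join_ob D) (fun y => y).
Proof.
  pose proof (gpgd_grpO SG) as GS; pose proof (gpgd_grpO (gpgd_ax (HP D))) as GH.
  unfold ker_join_ob; split; [exact (ker_join_ob_add D)|split; [intros y y1; reflexivity|]].
  split; [|split; [|split]].
  - intros [[x px] y]; simpl.
    rewrite (gpgd_src_add VP), (gpgd_src_idn VP), px; apply (grp_add0l GH).
  - intros [[x px] y]; simpl; unfold xm_tgt, ker_bd0; simpl.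
    rewrite (gpgd_tgt_add VP), (gpgd_tgt_idn VP); reflexivity.
  - intro y; simpl; apply (grp_add0l GS).
  - intros [[x px] y] [[x1 px1] y1]; simpl; unfold xm_tgt, ker_bd0; simpl; intro E.
    assert (Hs : os D (addO (SV D) x1 (oe D y1)) = y1).
    { rewrite (gpgd_src_add VP), (gpgd_src_idn VP), px1; apply (grp_add0l GH). }
    rewrite (gpgd_cmpE VP), Hs by (rewrite Hs, (gpgd_tgt_add VP), (gpgd_tgt_idn VP); exact E).
    group_simpl GS; reflexivity.
Qed.

Lemma counit_mor : is_dgg_mor DD D (ker_join_ar D) (fun b => b) (ker_join_ob D) (fun y => y).
Proof.
  exact (dgg_mor_intro DD D _ _ _ _ counit_SV (is_gg_mor_id _ _ _ _ _ _)
    counit_hor_ar counit_hor_ob).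
Qed.

Definition dgg_counit : DHom DD D := MkDHom counit_mor.

Lemma ker_split_ar_pf u : hs D (addA (SV D) u (negA (SV D) (he D (hs D u)))) = zeroA (HP D).
Proof.
  rewrite (gpgd_src_add SH), (gpgd_srcN SH), (gpgd_src_idn SH).
  apply (grp_addNr (gpgd_grp (gpgd_ax (HP D)))).
Qed.
Lemma ker_split_ob_pf v : os D (addO (SV D) v (negO (SV D) (oe D (os D v)))) = zeroO (HP D).
Proof.
  rewrite (gpgd_src_add VP), (gpgd_srcN VP), (gpgd_src_idn VP).
  apply (grp_addNr (gpgd_grpO (gpgd_ax (HP D)))).
Qed.

Definition ker_split_ar (u : Ar (SV D)) : Ar (SV DD) := (exist _ _ (ker_split_ar_pf u), hs D u).
Definition ker_split_ob (v : Ob (SV D)) : Ob (SV DD) := (exist _ _ (ker_split_ob_pf v), os D v).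

Lemma ker_join_split_ar u : ker_join_ar D (ker_split_ar u) = u.
Proof. unfold ker_join_ar; simpl; group_simpl (gpgd_grp SG); reflexivity. Qed.
Lemma ker_join_split_ob v : ker_join_ob D (ker_split_ob v) = v.
Proof. unfold ker_join_ob; simpl; group_simpl (gpgd_grpO SG); reflexivity. Qed.
Lemma ker_split_join_ar p : ker_split_ar (ker_join_ar D p) = p.
Proof. apply ker_join_ar_inj, ker_join_split_ar. Qed.
Lemma ker_split_join_ob p : ker_split_ob (ker_join_ob D p) = p.
Proof. apply ker_join_ob_inj, ker_join_split_ob. Qed.

Definition dgg_counit_inv : DHom D DD :=
  MkDHom (dgg_mor_rev counit_mor ker_split_join_ar ker_join_split_ar (fun b => eq_refl)
    (fun b => eq_refl) ker_split_join_ob ker_join_split_ob (fun y => eq_refl) (fun y => eq_refl)).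

End Counit.

Lemma dhom_of_xhom_functor : is_functor XModGpGd DblGpGd dgg_of_xmod dhom_of_xhom.
Proof.
  split; [|split]; simpl.
  - intros X Y f g (E1 & E2 & E3 & E4).
    split; [|split; [|split]]; intros; simpl; unfold prod_map;
      rewrite ?E1, ?E2, ?E3, ?E4; reflexivity.
  - intro X; split; [|split; [|split]]; intro p; try destruct p; reflexivity.
  - intros X Y Z g f; split; [|split; [|split]]; intros; reflexivity.
Qed.

Lemma xhom_of_dhom_functor : is_functor DblGpGd XModGpGd xmod_of_dgg xhom_of_dhom.
Proof.
  split; [|split]; simpl.
  - intros D E f g (E1 & E2 & E3 & E4).
    split; [|split; [|split]]; intros; try apply sig_eq; simpl; auto.
  - intro D; split; [|split; [|split]]; intros; try apply sig_eq; reflexivity.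
  - intros D E F g f; split; [|split; [|split]]; intros; try apply sig_eq; reflexivity.
Qed.

Lemma xmod_unit_nat_iso :
  is_nat_iso XModGpGd XModGpGd (fun X => X) (fun X => xmod_of_dgg (dgg_of_xmod X))
    (fun X Y f => f) (fun X Y f => xhom_of_dhom _ _ (dhom_of_xhom _ _ f)) xmod_unit.
Proof.
  split.
  - intros X Y f; simpl; split; [|split; [|split]]; intros; try reflexivity;
      apply sig_eq; simpl; unfold prod_map; simpl.
    + rewrite (mor_zero (hg_mor f)); reflexivity.
    + rewrite (mor_zeroO (hg_mor f)); reflexivity.
  - intro X; exists (xmod_unit_inv X); simpl; split.
    + split; [|split; [|split]]; intros; reflexivity.
    + split; [|split; [|split]]; intros; simpl; [apply unit_ar_fst | apply unit_ob_fst | ..];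
        reflexivity.
Qed.

Lemma dgg_counit_nat_iso :
  is_nat_iso DblGpGd DblGpGd (fun D => dgg_of_xmod (xmod_of_dgg D)) (fun D => D)
    (fun D E f => dhom_of_xhom _ _ (xhom_of_dhom _ _ f)) (fun D E f => f) dgg_counit.
Proof.
  split.
  - intros D E f; simpl; split; [|split; [|split]]; intros; try reflexivity.
    + destruct a as [[a pa] b]; simpl; unfold ker_join_ar, prod_map; simpl.
      rewrite (mor_add (dhom_SV f)), dhom_he; reflexivity.
    + destruct x as [[x px] y]; simpl; unfold ker_join_ob, prod_map; simpl.
      rewrite (mor_addO (dhom_SV f)), dhom_oe; reflexivity.
  - intro D; exists (dgg_counit_inv D); simpl; split.
    + split; [|split; [|split]]; intros; simpl;
        [apply ker_split_join_ar | reflexivity | apply ker_split_join_ob | reflexivity].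
    + split; [|split; [|split]]; intros; simpl;
        [apply ker_join_split_ar | reflexivity | apply ker_join_split_ob | reflexivity].
Qed.

Theorem mainTheorem1 : cat_equivalent XModGpGd DblGpGd.
Proof.
  exists dgg_of_xmod, dhom_of_xhom, xmod_of_dgg, xhom_of_dhom.
  split; [exact dhom_of_xhom_functor|].
  split; [exact xhom_of_dhom_functor|].
  split; [exists xmod_unit; exact xmod_unit_nat_iso | exists dgg_counit; exact dgg_counit_nat_iso].
Qed.
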